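(* Let $\Omega\subseteq\mathbb R^d$, $F$ and $\mathcal I$ be as below, and suppose the PDE $F(x,V(x),DV(x),D^2V(x),[\mathcal IV](x))=0$ on $\overline\Omega$ satisfies the comparison principle. Let $(S,\mathcal I^h)_{h>0}$ be a numerical scheme that is monotone, stable, nonlocally consistent, and satisfies the technical condition (T). For each $h>0$ let $V^h\in B(\overline\Omega)$ be a solution of the scheme, i.e. $S(h,x,V^h,[\mathcal I^hV^h](x))=0$ for all $x\in\overline\Omega$. Then, as $h\to0$, $V^h$ converges locally uniformly on $\overline\Omega$ to the unique bounded viscosity solution of the PDE.
   Context: $\mathcal S^d$ is the set of real symmetric $d\times d$ matrices; $B(\overline\Omega)$ the bounded real functions on $\overline\Omega$. $F:\overline\Omega\times\mathbb R\times\mathbb R^d\times\mathcal S^d\times\mathbb R\to\mathbb R$ is locally bounded and $\mathcal I$ maps $B(\overline\Omega)$ into real functions on $\overline\Omega$. $C^2(\overline\Omega)$ means functions that are $C^2$ on a neighbourhood of $\overline\Omega$. For a locally bounded $u$ on a metric space, $u^*(x)=\limsup_{y\to x}u(y)$ and $u_*(x)=\liminf_{y\to x}u(y)$; $F^*,F_*$ are the envelopes of $F$ in all its arguments. An upper (resp. lower) semicontinuous $V:\overline\Omega\to\mathbb R$ is a viscosity subsolution (resp. supersolution) if for every $\varphi\in C^2(\overline\Omega)$ and $x\in\overline\Omega$ at which $V-\varphi$ has a local maximum (resp. minimum) relative to $\overline\Omega$, $F_*(x,V(x),D\varphi(x),D^2\varphi(x),[\mathcal IV](x))\le0$ (resp.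 $F^*(\ldots)\ge0$); a viscosity solution is both. Comparison principle: whenever $U,V\in B(\overline\Omega)$ are a subsolution and supersolution, $U\le V$. A scheme is a pair of maps $S:(0,\infty)\times\overline\Omega\times B(\overline\Omega)\times\mathbb R\to\mathbb R$ and $\mathcal I^h:B(\overline\Omega)\to B(\overline\Omega)$. Monotone: $S(h,x,V,\ell)\le S(h,x,\hat V,\ell)$ whenever $V\ge\hat V$ and $V(x)=\hat V(x)$. Stable: there is $C$ with $\|V^h\|_\infty\le C$ for every solution $V^h$ of the scheme and every $h$. Half-relaxed limits of a locally bounded family $(u^h)$: $\overline u(x)=\limsup_{h\to0,y\to x}u^h(y)$, $\underline u(x)=\liminf_{h\to0,y\to x}u^h(y)$. Nonlocally consistent: for every uniformly bounded family $(u^h)_{h>0}\subset B(\overline\Omega)$, every $\varphi\in C^2(\overline\Omega)$ and $x\in\overline\Omega$, $\liminf_{h\to0,y\to x,\xi\to0}S(h,y,\varphi+\xi,[\mathcal I^hu^h](y))\ge F_*(x,\varphi(x),D\varphi(x),D^2\varphi(x),[\mathcal I\overline u](x))$ and $\limsup_{h\to0,y\to x,\xi\to0}S(h,y,\varphi+\xi,[\mathcal I^hu^h](y))\le F^*(x,\varphi(x),D\varphi(x),D^2\varphi(x),[\mathcal I\underline u](x))$ ($\xi$ ranges over real constants). (T): there is $f:(0,\infty)\times\overline\Omega\to[0,\infty)$ with $\lim_{h\to0,y\to x}f(y,h)=0$ for all $x$ and $|S(h,x,\psi,\ell)-S(h,x,\varphi,\ell)|\le f(x,h)$ for all $h,x,\ell$,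 $\varphi\in B(\overline\Omega)$ and $\psi=\varphi\pm e^{-1/h}\mathbf 1_{\{x\}}$. *)

From Stdlib Require Import Reals Lra ClassicalEpsilon.
Open Scope R_scope.

Fixpoint sumR (n : nat) (f : nat -> R) : R :=
  match n with O => 0 | S k => sumR k f + f k end.

(** R^d: coordinate sequences vanishing from index d on. *)
Definition Rd (d : nat) := {x : nat -> R | forall i, (d <= i)%nat -> x i = 0}.

(** S^d: real symmetric d x d matrices (entries vanishing outside d x d). *)
Definition Sym (d : nat) :=
  {M : nat -> nat -> R |
     (forall i j, M i j = M j i) /\ (forall i j, (d <= i)%nat -> M i j = 0)}.

Definition vnorm (d : nat) (x : nat -> R) : R :=
  sqrt (sumR d (fun i => x i ^ 2)).
Definition mnorm (d : nat) (M : nat -> nat -> R) : R :=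
  sqrt (sumR d (fun i => sumR d (fun j => M i j ^ 2))).

Definition vdist {d : nat} (x y : Rd d) : R :=
  vnorm d (fun i => proj1_sig x i - proj1_sig y i).
Definition mdist {d : nat} (M N : Sym d) : R :=
  mnorm d (fun i j => proj1_sig M i j - proj1_sig N i j).

Definition closure {d : nat} (Om : Rd d -> Prop) (x : Rd d) : Prop :=
  forall eps, 0 < eps -> exists y, Om y /\ vdist x y < eps.

Definition Clos {d : nat} (Om : Rd d -> Prop) := {x : Rd d | closure Om x}.

Definition cdist {d : nat} {Om : Rd d -> Prop} (x y : Clos Om) : R :=
  vdist (proj1_sig x) (proj1_sig y).

Definition bnd {d : nat} {Om : Rd d -> Prop} (u : Clos Om -> R) : Prop :=
  exists C, forall x, Rabs (u x) <= C.

Definition is_limsup {T : Type} (near : R -> T -> Prop) (f : T -> R) (L : R) : Prop :=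
  (forall eps, 0 < eps ->
     exists delta, 0 < delta /\ forall w, near delta w -> f w < L + eps) /\
  (forall eps delta, 0 < eps -> 0 < delta ->
     exists w, near delta w /\ L - eps < f w).

(** The (finite) limsup value; junk value if the limsup is not finite. *)
Definition limsup_val {T : Type} (near : R -> T -> Prop) (f : T -> R) : R :=
  epsilon (inhabits 0) (fun L => is_limsup near f L).
Definition liminf_val {T : Type} (near : R -> T -> Prop) (f : T -> R) : R :=
  - limsup_val near (fun w => - f w).

(** liminf f >= c and limsup f <= c (in the extended reals). *)
Definition liminf_ge {T : Type} (near : R -> T -> Prop) (f : T -> R) (c : R) : Prop :=
  forall eps, 0 < eps ->
    exists delta, 0 < delta /\ forall w, near delta w -> c - eps < f w.
Definition limsup_le {T : Type} (near : R -> T -> Prop) (f : T -> R) (c : R) : Prop :=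
  forall eps, 0 < eps ->
    exists delta, 0 < delta /\ forall w, near delta w -> f w < c + eps.

Definition Farg {d : nat} (Om : Rd d -> Prop) :=
  (Clos Om * R * Rd d * Sym d * R)%type.

Definition near_arg {d : nat} {Om : Rd d -> Prop}
  (x : Clos Om) (r : R) (p : Rd d) (M : Sym d) (l : R)
  (delta : R) (w : Farg Om) : Prop :=
  match w with (x', r', p', M', l') =>
    cdist x' x < delta /\ Rabs (r' - r) < delta /\ vdist p' p < delta /\
    mdist M' M < delta /\ Rabs (l' - l) < delta
  end.

Definition Funcurry {d : nat} {Om : Rd d -> Prop}
  (F : Clos Om -> R -> Rd d -> Sym d -> R -> R) (w : Farg Om) : R :=
  match w with (x', r', p', M', l') => F x' r' p' M' l' end.

Definition Fupper {d : nat} {Om : Rd d -> Prop}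
  (F : Clos Om -> R -> Rd d -> Sym d -> R -> R)
  (x : Clos Om) (r : R) (p : Rd d) (M : Sym d) (l : R) : R :=
  limsup_val (near_arg x r p M l) (Funcurry F).
Definition Flower {d : nat} {Om : Rd d -> Prop}
  (F : Clos Om -> R -> Rd d -> Sym d -> R -> R)
  (x : Clos Om) (r : R) (p : Rd d) (M : Sym d) (l : R) : R :=
  liminf_val (near_arg x r p M l) (Funcurry F).

Definition locally_bounded {d : nat} {Om : Rd d -> Prop}
  (F : Clos Om -> R -> Rd d -> Sym d -> R -> R) : Prop :=
  forall x r p M l, exists delta C, 0 < delta /\
    forall w, near_arg x r p M l delta w -> Rabs (Funcurry F w) <= C.

Definition ropen {d : nat} (U : Rd d -> Prop) : Prop :=
  forall x, U x -> exists r, 0 < r /\ forall y, vdist y x < r -> U y.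

Definition has_grad {d : nat} (phi : Rd d -> R) (Dphi : Rd d -> Rd d) (x : Rd d) : Prop :=
  forall eps, 0 < eps -> exists delta, 0 < delta /\ forall y, vdist y x < delta ->
    Rabs (phi y - phi x
          - sumR d (fun i => proj1_sig (Dphi x) i * (proj1_sig y i - proj1_sig x i)))
    <= eps * vdist y x.

Definition has_hess {d : nat} (Dphi : Rd d -> Rd d) (D2phi : Rd d -> Sym d) (x : Rd d) : Prop :=
  forall eps, 0 < eps -> exists delta, 0 < delta /\ forall y, vdist y x < delta ->
    vnorm d (fun i => proj1_sig (Dphi y) i - proj1_sig (Dphi x) i
                 - sumR d (fun j => proj1_sig (D2phi x) i j * (proj1_sig y j - proj1_sig x j)))
    <= eps * vdist y x.

Definition cont_sym {d : nat} (D2phi : Rd d -> Sym d) (x : Rd d) : Prop :=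
  forall eps, 0 < eps -> exists delta, 0 < delta /\ forall y, vdist y x < delta ->
    mdist (D2phi y) (D2phi x) < eps.

Definition C2_closure {d : nat} (Om : Rd d -> Prop) (phi : Rd d -> R)
  (Dphi : Rd d -> Rd d) (D2phi : Rd d -> Sym d) : Prop :=
  exists U : Rd d -> Prop, ropen U /\ (forall x, closure Om x -> U x) /\
    forall x, U x -> has_grad phi Dphi x /\ has_hess Dphi D2phi x /\ cont_sym D2phi x.

Definition usc {d : nat} {Om : Rd d -> Prop} (V : Clos Om -> R) : Prop :=
  forall x eps, 0 < eps -> exists delta, 0 < delta /\
    forall y, cdist y x < delta -> V y < V x + eps.
Definition lsc {d : nat} {Om : Rd d -> Prop} (V : Clos Om -> R) : Prop :=
  forall x eps, 0 < eps -> exists delta, 0 < delta /\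
    forall y, cdist y x < delta -> V x - eps < V y.

Definition loc_max {d : nat} {Om : Rd d -> Prop} (u : Clos Om -> R) (x : Clos Om) : Prop :=
  exists r, 0 < r /\ forall y, cdist y x < r -> u y <= u x.
Definition loc_min {d : nat} {Om : Rd d -> Prop} (u : Clos Om -> R) (x : Clos Om) : Prop :=
  exists r, 0 < r /\ forall y, cdist y x < r -> u x <= u y.

Definition visc_sub {d : nat} {Om : Rd d -> Prop}
  (F : Clos Om -> R -> Rd d -> Sym d -> R -> R)
  (I : (Clos Om -> R) -> (Clos Om -> R)) (V : Clos Om -> R) : Prop :=
  usc V /\
  forall phi Dphi D2phi, C2_closure Om phi Dphi D2phi ->
  forall x : Clos Om, loc_max (fun y => V y - phi (proj1_sig y)) x ->
    Flower F x (V x) (Dphi (proj1_sig x)) (D2phi (proj1_sig x)) (I V x) <= 0.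

Definition visc_super {d : nat} {Om : Rd d -> Prop}
  (F : Clos Om -> R -> Rd d -> Sym d -> R -> R)
  (I : (Clos Om -> R) -> (Clos Om -> R)) (V : Clos Om -> R) : Prop :=
  lsc V /\
  forall phi Dphi D2phi, C2_closure Om phi Dphi D2phi ->
  forall x : Clos Om, loc_min (fun y => V y - phi (proj1_sig y)) x ->
    Fupper F x (V x) (Dphi (proj1_sig x)) (D2phi (proj1_sig x)) (I V x) >= 0.

Definition visc_sol {d : nat} {Om : Rd d -> Prop} F I (V : Clos Om -> R) : Prop :=
  visc_sub F I V /\ visc_super F I V.

Definition comparison {d : nat} {Om : Rd d -> Prop}
  (F : Clos Om -> R -> Rd d -> Sym d -> R -> R)
  (I : (Clos Om -> R) -> (Clos Om -> R)) : Prop :=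
  forall U V : Clos Om -> R, bnd U -> bnd V -> visc_sub F I U -> visc_super F I V ->
    forall x, U x <= V x.

Definition scheme_sol {d : nat} {Om : Rd d -> Prop}
  (S : R -> Clos Om -> (Clos Om -> R) -> R -> R)
  (Ih : R -> (Clos Om -> R) -> (Clos Om -> R)) (h : R) (V : Clos Om -> R) : Prop :=
  bnd V /\ forall x, S h x V (Ih h V x) = 0.

Definition monotone {d : nat} {Om : Rd d -> Prop}
  (S : R -> Clos Om -> (Clos Om -> R) -> R -> R) : Prop :=
  forall h x (V Vh : Clos Om -> R) l, 0 < h -> bnd V -> bnd Vh ->
    (forall y, Vh y <= V y) -> V x = Vh x -> S h x V l <= S h x Vh l.

Definition stable {d : nat} {Om : Rd d -> Prop}
  (S : R -> Clos Om -> (Clos Om -> R) -> R -> R)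
  (Ih : R -> (Clos Om -> R) -> (Clos Om -> R)) : Prop :=
  exists C, forall h V, 0 < h -> scheme_sol S Ih h V -> forall x, Rabs (V x) <= C.

Definition near_hy {d : nat} {Om : Rd d -> Prop} (x : Clos Om) (delta : R)
  (w : R * Clos Om) : Prop :=
  0 < fst w < delta /\ cdist (snd w) x < delta.

Definition hr_sup {d : nat} {Om : Rd d -> Prop} (u : R -> Clos Om -> R) (x : Clos Om) : R :=
  limsup_val (near_hy x) (fun w => u (fst w) (snd w)).
Definition hr_inf {d : nat} {Om : Rd d -> Prop} (u : R -> Clos Om -> R) (x : Clos Om) : R :=
  liminf_val (near_hy x) (fun w => u (fst w) (snd w)).

Definition near_hyxi {d : nat} {Om : Rd d -> Prop} (x : Clos Om) (delta : R)
  (w : R * Clos Om * R) : Prop :=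
  match w with (h, y, xi) => 0 < h < delta /\ cdist y x < delta /\ Rabs xi < delta end.

Definition nonloc_consistent {d : nat} {Om : Rd d -> Prop}
  (F : Clos Om -> R -> Rd d -> Sym d -> R -> R)
  (I : (Clos Om -> R) -> (Clos Om -> R))
  (S : R -> Clos Om -> (Clos Om -> R) -> R -> R)
  (Ih : R -> (Clos Om -> R) -> (Clos Om -> R)) : Prop :=
  forall u : R -> Clos Om -> R,
  (exists C, forall h x, 0 < h -> Rabs (u h x) <= C) ->
  forall phi Dphi D2phi, C2_closure Om phi Dphi D2phi ->
  forall x : Clos Om,
    liminf_ge (near_hyxi x)
      (fun w => match w with (h, y, xi) =>
         S h y (fun z => phi (proj1_sig z) + xi) (Ih h (u h) y) end)
      (Flower F x (phi (proj1_sig x)) (Dphi (proj1_sig x)) (D2phi (proj1_sig x))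
              (I (hr_sup u) x))
    /\
    limsup_le (near_hyxi x)
      (fun w => match w with (h, y, xi) =>
         S h y (fun z => phi (proj1_sig z) + xi) (Ih h (u h) y) end)
      (Fupper F x (phi (proj1_sig x)) (Dphi (proj1_sig x)) (D2phi (proj1_sig x))
              (I (hr_inf u) x)).

Definition ind {d : nat} {Om : Rd d -> Prop} (x y : Clos Om) : R :=
  if excluded_middle_informative (y = x) then 1 else 0.

Definition condT {d : nat} {Om : Rd d -> Prop}
  (S : R -> Clos Om -> (Clos Om -> R) -> R -> R) : Prop :=
  exists f : R -> Clos Om -> R,
    (forall h x, 0 < h -> 0 <= f h x) /\
    (forall x eps, 0 < eps -> exists delta, 0 < delta /\
        forall h y, 0 < h < delta -> cdist y x < delta -> f h y < eps) /\
    (forall h x l (phi : Clos Om -> R) (s : R), 0 < h -> bnd phi -> (s = 1 \/ s = -1) ->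
       Rabs (S h x (fun y => phi y + s * exp (- / h) * ind x y) l - S h x phi l)
       <= f h x).

Definition loc_unif_conv {d : nat} {Om : Rd d -> Prop}
  (Vh : R -> Clos Om -> R) (V : Clos Om -> R) : Prop :=
  forall x : Clos Om, exists r, 0 < r /\
    forall eps, 0 < eps -> exists h0, 0 < h0 /\
      forall h y, 0 < h < h0 -> cdist y x < r -> Rabs (Vh h y - V y) < eps.

(* The Barles-Souganidis argument. By stability the half-relaxed limits [hr_sup Vh] and
   [hr_inf Vh] are bounded; the first is a viscosity subsolution and the second a
   supersolution, so comparison gives [hr_sup Vh <= hr_inf Vh], hence equality. The common
   value is the unique bounded solution, and equality of the half-relaxed limits yields
   locally uniform convergence by compactness of closed balls.
   For the subsolution property where [hr_sup Vh - phi] has a local maximum at [x], [phi]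
   is replaced by [psi = theta (phi - K) + K] with a C^2 bump [theta]: [psi] agrees with
   [phi] to second order at [x], exceeds it away from [x] and equals the large constant
   [K] far away, so the maxima of [Vh h - psi] concentrate at [x]. They need not be
   attained; at an [exp (-1/h)]-approximate maximiser [y] the function [psi + xi] lies
   above [Vh h + exp (-1/h) 1_y] with equality at [y], so monotonicity, condition (T)
   and [S h y (Vh h) _ = 0] give [S h y (psi + xi) _ <= f h y -> 0], contradicting
   consistency if the lower envelope of [F] were positive. *)

From Pilot Require Import Defs.
From Stdlib Require Import Reals Lra Lia Classical ClassicalEpsilon FunctionalExtensionality ProofIrrelevance.
Open Scope R_scope.

Lemma Rabs_le_bounds x C : Rabs x <= C -> - C <= x <= C.
Proof. unfold Rabs; destruct Rcase_abs; lra. Qed.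

Lemma sumR_ext n f g : (forall i, (i < n)%nat -> f i = g i) -> sumR n f = sumR n g.
Proof.
  induction n as [|n IH]; simpl; intros H; [reflexivity|].
  rewrite IH, H; [reflexivity | lia | intros; apply H; lia].
Qed.

Lemma sumR_add n f g : sumR n (fun i => f i + g i) = sumR n f + sumR n g.
Proof. induction n as [|n IH]; simpl; [lra|]. rewrite IH. ring. Qed.

Lemma sumR_sub n f g : sumR n (fun i => f i - g i) = sumR n f - sumR n g.
Proof. induction n as [|n IH]; simpl; [lra|]. rewrite IH. ring. Qed.

Lemma sumR_scal n c f : sumR n (fun i => c * f i) = c * sumR n f.
Proof. induction n as [|n IH]; simpl; [lra|]. rewrite IH. ring. Qed.

Lemma sumR_const n c : sumR n (fun _ => c) = INR n * c.
Proof. induction n as [|n IH]; simpl sumR; [simpl; lra|]. rewrite IH, S_INR. ring. Qed.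

Lemma sumR_kronecker n i c v : (i < n)%nat ->
  sumR n (fun j => (if Nat.eq_dec i j then c else 0) * v j) = c * v i.
Proof.
  induction n as [|n IH]; intros Hi; [lia|]. simpl. destruct (Nat.eq_dec i n) as [->|Hne].
  - rewrite (sumR_ext _ _ (fun _ => 0)), sumR_const by
      (intros j Hj; destruct (Nat.eq_dec n j); [lia | ring]).
    ring.
  - rewrite IH by lia. ring.
Qed.

Lemma sumR_le n f g : (forall i, (i < n)%nat -> f i <= g i) -> sumR n f <= sumR n g.
Proof.
  induction n as [|n IH]; simpl; intros H; [lra|].
  assert (f n <= g n) by (apply H; lia).
  assert (sumR n f <= sumR n g) by (apply IH; intros; apply H; lia). lra.
Qed.

Lemma sumR_nonneg n f : (forall i, (i < n)%nat -> 0 <= f i) -> 0 <= sumR n f.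
Proof.
  intros H. rewrite <- (Rmult_0_r (INR n)), <- sumR_const. apply sumR_le. auto.
Qed.

Lemma sumR_term_le n f i : (forall j, (j < n)%nat -> 0 <= f j) -> (i < n)%nat -> f i <= sumR n f.
Proof.
  induction n as [|n IH]; intros H Hi; [lia|]. simpl.
  assert (0 <= sumR n f) by (apply sumR_nonneg; intros; apply H; lia).
  destruct (Nat.eq_dec i n) as [->|Hne]; [lra|].
  assert (f i <= sumR n f) by (apply IH; [intros; apply H|]; lia).
  assert (0 <= f n) by (apply H; lia). lra.
Qed.

Lemma Rabs_sumR_le n f : Rabs (sumR n f) <= sumR n (fun i => Rabs (f i)).
Proof.
  induction n as [|n IH]; simpl; [rewrite Rabs_R0; lra|].
  eapply Rle_trans; [apply Rabs_triang | lra].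
Qed.

Lemma sumR_Cauchy_Schwarz n a b :
  (sumR n (fun i => a i * b i)) ^ 2 <= sumR n (fun i => a i ^ 2) * sumR n (fun i => b i ^ 2).
Proof.
  induction n as [|n IH]; cbn [sumR]; [lra|].
  set (P := sumR n (fun i => a i * b i)) in *.
  set (A := sumR n (fun i => a i ^ 2)) in *.
  set (B := sumR n (fun i => b i ^ 2)) in *.
  assert (HA : 0 <= A) by (apply sumR_nonneg; intros; nra).
  assert (HB : 0 <= B) by (apply sumR_nonneg; intros; nra).
  assert (HP : Rabs P <= sqrt A * sqrt B).
  { rewrite <- sqrt_mult, <- (sqrt_pow2 (Rabs P)) by (auto using Rabs_pos).
    apply sqrt_le_1_alt. rewrite pow2_abs. exact IH. }
  (* AM-GM: [2 |P| |a_n b_n| <= A b_n^2 + B a_n^2], through [sqrt A * sqrt B] *)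
  assert (Hcross : 2 * Rabs P * Rabs (a n * b n) <= A * b n ^ 2 + B * a n ^ 2).
  { rewrite Rabs_mult.
    pose proof (sqrt_sqrt A HA). pose proof (sqrt_sqrt B HB).
    pose proof (sqrt_pos A). pose proof (sqrt_pos B).
    pose proof (Rabs_pos (a n)). pose proof (Rabs_pos (b n)).
    rewrite <- (pow2_abs (a n)), <- (pow2_abs (b n)).
    assert (Rabs P * (Rabs (a n) * Rabs (b n)) <= sqrt A * sqrt B * (Rabs (a n) * Rabs (b n)))
      by (apply Rmult_le_compat_r; nra).
    pose proof (pow2_ge_0 (sqrt A * Rabs (b n) - sqrt B * Rabs (a n))) as Hsq.
    replace ((sqrt A * Rabs (b n) - sqrt B * Rabs (a n)) ^ 2) with
      (sqrt A * sqrt A * Rabs (b n) ^ 2 + sqrt B * sqrt B * Rabs (a n) ^ 2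
       - 2 * (sqrt A * sqrt B) * (Rabs (a n) * Rabs (b n))) in Hsq by ring.
    nra. }
  assert (P * (a n * b n) <= Rabs P * Rabs (a n * b n)) by (rewrite <- Rabs_mult; apply Rle_abs).
  nra.
Qed.

Section Norms.
Variable d : nat.

Lemma vnorm_sq v : vnorm d v ^ 2 = sumR d (fun i => v i ^ 2).
Proof. apply pow2_sqrt, sumR_nonneg. intros; nra. Qed.

Lemma vnorm_ext v w : (forall i, (i < d)%nat -> v i = w i) -> vnorm d v = vnorm d w.
Proof. intros H. unfold vnorm. f_equal. apply sumR_ext. intros i Hi. rewrite H; auto. Qed.

Lemma vnorm_triangle v w : vnorm d (fun i => v i + w i) <= vnorm d v + vnorm d w.
Proof.
  pose proof (sqrt_pos (sumR d (fun i => v i ^ 2))) as Hv.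
  pose proof (sqrt_pos (sumR d (fun i => w i ^ 2))) as Hw. fold (vnorm d v) (vnorm d w) in Hv, Hw.
  unfold vnorm at 1. rewrite <- (sqrt_pow2 (vnorm d v + vnorm d w)) by lra.
  apply sqrt_le_1_alt.
  rewrite (sumR_ext _ _ (fun i => v i ^ 2 + w i ^ 2 + 2 * (v i * w i))) by (intros; ring).
  rewrite !sumR_add, sumR_scal, <- (vnorm_sq v), <- (vnorm_sq w).
  pose proof (sumR_Cauchy_Schwarz d v w) as HCS. rewrite <- (vnorm_sq v), <- (vnorm_sq w) in HCS.
  set (P := sumR d (fun i => v i * w i)) in *.
  assert (Rabs P <= vnorm d v * vnorm d w).
  { rewrite <- (sqrt_pow2 (vnorm d v * vnorm d w)), <- (sqrt_pow2 (Rabs P)) by (nra || apply Rabs_pos).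
    apply sqrt_le_1_alt. rewrite pow2_abs. nra. }
  pose proof (Rle_abs P). nra.
Qed.

Lemma Rabs_coord_le_vnorm v i : (i < d)%nat -> Rabs (v i) <= vnorm d v.
Proof.
  intros Hi. unfold vnorm. rewrite <- (sqrt_pow2 (Rabs (v i))) by apply Rabs_pos.
  apply sqrt_le_1_alt. rewrite pow2_abs.
  apply (sumR_term_le d (fun i => v i ^ 2)); auto. intros; nra.
Qed.

Lemma vnorm_le_coord_bound v c : 0 <= c ->
  (forall i, (i < d)%nat -> Rabs (v i) <= c) -> vnorm d v <= INR d * c.
Proof.
  intros Hc H. unfold vnorm. pose proof (pos_INR d).
  rewrite <- (sqrt_pow2 (INR d * c)) by nra. apply sqrt_le_1_alt.
  apply Rle_trans with (sumR d (fun _ => c ^ 2)).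
  - apply sumR_le. intros i Hi. rewrite <- pow2_abs.
    apply pow_incr. split; [apply Rabs_pos | auto].
  - rewrite sumR_const. destruct d as [|d']; [simpl; lra|].
    assert (1 <= INR (S d')) by (apply (le_INR 1); lia). nra.
Qed.

Lemma Rabs_dot_le b v : Rabs (sumR d (fun j => b j * v j)) <= sumR d (fun j => Rabs (b j)) * vnorm d v.
Proof.
  eapply Rle_trans; [apply Rabs_sumR_le|]. rewrite Rmult_comm, <- sumR_scal.
  apply sumR_le. intros j Hj. rewrite Rabs_mult, Rmult_comm.
  apply Rmult_le_compat_r; [apply Rabs_pos | apply Rabs_coord_le_vnorm; auto].
Qed.

Lemma Rabs_entry_le_mnorm M i j : (i < d)%nat -> (j < d)%nat -> Rabs (M i j) <= mnorm d M.
Proof.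
  intros Hi Hj. unfold mnorm. rewrite <- (sqrt_pow2 (Rabs (M i j))) by apply Rabs_pos.
  apply sqrt_le_1_alt. rewrite pow2_abs.
  eapply Rle_trans; [| apply (sumR_term_le d (fun i => sumR d (fun j => M i j ^ 2)) i)]; auto.
  - apply (sumR_term_le d (fun j => M i j ^ 2)); auto. intros; nra.
  - intros; apply sumR_nonneg; intros; nra.
Qed.

Lemma mnorm_le_entry_bound M c : 0 <= c ->
  (forall i j, (i < d)%nat -> (j < d)%nat -> Rabs (M i j) <= c) -> mnorm d M <= INR d * c.
Proof.
  intros Hc H. unfold mnorm. pose proof (pos_INR d).
  rewrite <- (sqrt_pow2 (INR d * c)) by nra. apply sqrt_le_1_alt.
  apply Rle_trans with (sumR d (fun _ => INR d * c ^ 2)).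
  - apply sumR_le. intros i Hi. rewrite <- sumR_const. apply sumR_le. intros j Hj.
    rewrite <- pow2_abs. apply pow_incr. split; [apply Rabs_pos | auto].
  - rewrite sumR_const. nra.
Qed.

Lemma vdist_sym (x y : Rd d) : vdist x y = vdist y x.
Proof.
  unfold vdist, vnorm. f_equal. apply sumR_ext. intros; ring.
Qed.

Lemma vdist_refl (x : Rd d) : vdist x x = 0.
Proof.
  unfold vdist, vnorm. rewrite (sumR_ext _ _ (fun _ => 0)), sumR_const, Rmult_0_r.
  - apply sqrt_0.
  - intros; ring.
Qed.

Lemma vdist_tri (x y z : Rd d) : vdist x z <= vdist x y + vdist y z.
Proof.
  unfold vdist. eapply Rle_trans; [|apply vnorm_triangle]. right. apply vnorm_ext. intros; ring.
Qed.

Lemma vdist_nonneg (x y : Rd d) : 0 <= vdist x y.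
Proof. apply sqrt_pos. Qed.

Lemma closure_of_approx (Om : Rd d -> Prop) (z : Rd d) :
  (forall eps, 0 < eps -> exists y : Clos Om, vdist z (proj1_sig y) < eps) -> closure Om z.
Proof.
  intros H eps He. destruct (H (eps / 2)) as [[y Hy] Hzy]; [lra|]. simpl in Hzy.
  destruct (Hy (eps / 2)) as [o [Ho Hyo]]; [lra|].
  exists o. split; auto. pose proof (vdist_tri z y o). lra.
Qed.
End Norms.

Arguments vdist_sym {d}. Arguments vdist_refl {d}. Arguments vdist_tri {d}.
Arguments vdist_nonneg {d}. Arguments closure_of_approx {d Om}.

Definition Rd_of {d : nat} (z : nat -> R) : Rd d.
Proof.
  exists (fun i => if Compare_dec.lt_dec i d then z i else 0).
  intros i Hi. destruct (Compare_dec.lt_dec i d); [lia | reflexivity].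
Defined.

Lemma Rd_of_coord {d : nat} z i : (i < d)%nat -> proj1_sig (@Rd_of d z) i = z i.
Proof. intros Hi. simpl. destruct (Compare_dec.lt_dec i d); [reflexivity | lia]. Qed.

(** * Finite limsup along a monotone family of neighbourhoods *)

Section Limsup.
Context {T : Type} (near : R -> T -> Prop).
Hypothesis near_mono : forall dl dl' w, dl <= dl' -> near dl w -> near dl' w.
Hypothesis near_nonempty : forall dl, 0 < dl -> exists w, near dl w.

Lemma near_Rmin dl1 dl2 w : near (Rmin dl1 dl2) w -> near dl1 w /\ near dl2 w.
Proof. intros H. split; apply (near_mono (Rmin dl1 dl2)); auto using Rmin_l, Rmin_r. Qed.

(* The limsup is minus the supremum of the [v] such that [f <= -v] eventually. *)
Lemma limsup_exists f : (exists dl0 C, 0 < dl0 /\ forall w, near dl0 w -> Rabs (f w) <= C) ->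
  exists L, is_limsup near f L.
Proof.
  intros [d0 [C [Hd0 HC]]].
  set (E := fun v => exists dl, 0 < dl <= d0 /\ forall w, near dl w -> f w <= - v).
  assert (Hbound : bound E).
  { exists C. intros v [dl [Hdl Hw]]. destruct (near_nonempty dl) as [w Hw']; [lra|].
    specialize (Hw w Hw'). apply (near_mono dl d0) in Hw'; [|lra].
    apply HC, Rabs_le_bounds in Hw'. lra. }
  assert (Hne : exists v, E v).
  { exists (- C), d0. split; [lra|]. intros w Hw. apply HC, Rabs_le_bounds in Hw. lra. }
  destruct (completeness E Hbound Hne) as [m [Hub Hlub]].
  exists (- m). split.
  - intros eps He. destruct (classic (exists v, E v /\ m - eps < v)) as [[v [[dl [Hdl Hw]] Hv]]|Hno].
    + exists dl. split; [lra|]. intros w Hw'. specialize (Hw w Hw'). lra.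
    + exfalso. enough (m <= m - eps) by lra. apply Hlub. intros v Ev.
      apply Rnot_lt_le. intros Hlt. apply Hno. eauto.
  - intros eps dl He Hdl. apply NNPP. intros Hno.
    enough (E (m + eps)) as Hm by (apply Hub in Hm; lra).
    exists (Rmin dl d0). split; [split; [apply Rmin_pos; lra | apply Rmin_r]|].
    intros w Hw. apply Rnot_lt_le. intros Hlt. apply Hno.
    exists w. split; [apply (near_Rmin dl d0 w Hw) | lra].
Qed.

Lemma limsup_unique f L1 L2 : is_limsup near f L1 -> is_limsup near f L2 -> L1 = L2.
Proof.
  assert (Hlt : forall a b, is_limsup near f a -> is_limsup near f b -> ~ a < b).
  { intros a b [Ha _] [_ Hb] Hab. destruct (Ha ((b - a) / 2)) as [dl [Hdl Hw]]; [lra|].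
    destruct (Hb ((b - a) / 2) dl) as [w [Hw1 Hw2]]; [lra | auto |].
    specialize (Hw w Hw1). lra. }
  intros H1 H2. destruct (Rtotal_order L1 L2) as [H|[H|H]]; auto; exfalso.
  - exact (Hlt L1 L2 H1 H2 H).
  - exact (Hlt L2 L1 H2 H1 H).
Qed.

Lemma limsup_val_spec f L : is_limsup near f L -> limsup_val near f = L.
Proof.
  intros H. apply (limsup_unique f); auto.
  apply (epsilon_spec (inhabits 0) (fun L => is_limsup near f L)). eauto.
Qed.

Lemma Rabs_limsup_le f L C dl0 : 0 < dl0 -> is_limsup near f L ->
  (forall w, near dl0 w -> Rabs (f w) <= C) -> Rabs L <= C.
Proof.
  intros Hd [Hup Hfreq] HC. apply Rabs_le. split; apply Rnot_lt_le; intros Hlt.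
  - destruct (Hup (- C - L)) as [dl [Hdl Hw]]; [lra|].
    destruct (near_nonempty (Rmin dl dl0)) as [w Hw']; [apply Rmin_pos; lra|].
    apply near_Rmin in Hw' as [Hw1 Hw2].
    specialize (Hw w Hw1). apply HC, Rabs_le_bounds in Hw2. lra.
  - destruct (Hfreq (L - C) dl0) as [w [Hw1 Hw2]]; [lra | lra |].
    apply HC, Rabs_le_bounds in Hw1. lra.
Qed.

Lemma limsup_opp_le f L1 L2 :
  is_limsup near f L1 -> is_limsup near (fun w => - f w) L2 -> - L2 <= L1.
Proof.
  intros [H1 _] [H2 _]. apply Rnot_lt_le. intros Hlt.
  destruct (H1 ((- L2 - L1) / 2)) as [a [Ha Hwa]]; [lra|].
  destruct (H2 ((- L2 - L1) / 2)) as [b [Hb Hwb]]; [lra|].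
  destruct (near_nonempty (Rmin a b)) as [w Hw]; [apply Rmin_pos; lra|].
  apply near_Rmin in Hw as [Hw1 Hw2]. specialize (Hwa w Hw1). specialize (Hwb w Hw2). lra.
Qed.

Lemma liminf_ge_nonpos f c : liminf_ge near f c ->
  (forall eps dl, 0 < eps -> 0 < dl -> exists w, near dl w /\ f w < eps) -> c <= 0.
Proof.
  intros Hc Hfreq. apply Rnot_lt_le. intros Hpos.
  destruct (Hc (c / 2)) as [dl [Hdl Hw]]; [lra|].
  destruct (Hfreq (c / 2) dl) as [w [Hnear Hlt]]; [lra | auto |].
  specialize (Hw w Hnear). lra.
Qed.

Lemma limsup_le_nonneg f c : limsup_le near f c ->
  (forall eps dl, 0 < eps -> 0 < dl -> exists w, near dl w /\ - eps < f w) -> 0 <= c.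
Proof.
  intros Hc Hfreq. apply Rnot_lt_le. intros Hneg.
  destruct (Hc (- c / 2)) as [dl [Hdl Hw]]; [lra|].
  destruct (Hfreq (- c / 2) dl) as [w [Hnear Hlt]]; [lra | auto |].
  specialize (Hw w Hnear). lra.
Qed.
End Limsup.

(** * Half-relaxed limits *)

Section HalfRelaxed.
Variable d : nat.
Variable Om : Rd d -> Prop.

Lemma near_hy_mono (x : Clos Om) dl dl' w : dl <= dl' -> near_hy x dl w -> near_hy x dl' w.
Proof. unfold near_hy. lra. Qed.

Lemma near_hy_nonempty (x : Clos Om) dl : 0 < dl -> exists w, near_hy x dl w.
Proof. intros H. exists (dl / 2, x). unfold near_hy, cdist. simpl. rewrite vdist_refl. lra. Qed.

Lemma near_hy_shift (x y : Clos Om) dl w :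
  cdist y x < dl / 2 -> near_hy y (dl / 2) w -> near_hy x dl w.
Proof.
  unfold near_hy, cdist. intros H [H1 H2]. split; [lra|].
  pose proof (vdist_tri (proj1_sig (snd w)) (proj1_sig y) (proj1_sig x)). lra.
Qed.

Lemma hr_inf_opp (u : R -> Clos Om -> R) x : hr_inf u x = - hr_sup (fun h y => - u h y) x.
Proof. reflexivity. Qed.

Section BoundedSup.
Variable u : R -> Clos Om -> R.
Variable C : R.
Hypothesis u_bounded : forall h x, 0 < h -> Rabs (u h x) <= C.

Let u_bounded_near x w : near_hy x 1 w -> Rabs (u (fst w) (snd w)) <= C.
Proof. intros [Hh _]. apply u_bounded. lra. Qed.

Lemma hr_sup_spec x : is_limsup (near_hy x) (fun w => u (fst w) (snd w)) (hr_sup u x).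
Proof.
  destruct (limsup_exists (near_hy x) (near_hy_mono x) (near_hy_nonempty x)
              (fun w => u (fst w) (snd w))) as [L HL].
  - exists 1, C. split; [lra | apply u_bounded_near].
  - unfold hr_sup. rewrite (limsup_val_spec _ _ _ HL). exact HL.
Qed.

Lemma Rabs_hr_sup_le x : Rabs (hr_sup u x) <= C.
Proof.
  apply (Rabs_limsup_le (near_hy x) (near_hy_mono x) (near_hy_nonempty x)
           (fun w => u (fst w) (snd w)) _ C 1);
    [lra | apply hr_sup_spec | apply u_bounded_near].
Qed.

Lemma hr_sup_usc : usc (hr_sup u).
Proof.
  intros x eps He. destruct (proj1 (hr_sup_spec x) (eps / 2)) as [dl [Hdl Hw]]; [lra|].
  exists (dl / 2). split; [lra|]. intros y Hy.
  destruct (proj2 (hr_sup_spec y) (eps / 2) (dl / 2)) as [w [Hw1 Hw2]]; [lra | lra |].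
  specialize (Hw w (near_hy_shift x y dl w Hy Hw1)). lra.
Qed.
End BoundedSup.

Section BoundedInf.
Variable u : R -> Clos Om -> R.
Variable C : R.
Hypothesis u_bounded : forall h x, 0 < h -> Rabs (u h x) <= C.

Let opp_u_bounded h x : 0 < h -> Rabs (- u h x) <= C.
Proof. rewrite Rabs_Ropp. apply u_bounded. Qed.

Lemma Rabs_hr_inf_le x : Rabs (hr_inf u x) <= C.
Proof. rewrite hr_inf_opp, Rabs_Ropp. exact (Rabs_hr_sup_le _ C opp_u_bounded x). Qed.

Lemma hr_inf_lsc : lsc (hr_inf u).
Proof.
  intros x eps He. destruct (hr_sup_usc _ C opp_u_bounded x eps He) as [dl [Hdl Hy]].
  exists dl. split; auto. intros y Hxy. specialize (Hy y Hxy). rewrite !hr_inf_opp. lra.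
Qed.

Lemma hr_inf_le_sup x : hr_inf u x <= hr_sup u x.
Proof.
  exact (limsup_opp_le (near_hy x) (near_hy_mono x) (near_hy_nonempty x) _ _ _
           (hr_sup_spec u C u_bounded x) (hr_sup_spec _ C opp_u_bounded x)).
Qed.
End BoundedInf.
End HalfRelaxed.

(** * Compactness of closed balls of the closure *)

Lemma exists_inv_succ_lt dl : 0 < dl -> exists N : nat, / (INR N + 1) < dl.
Proof.
  intros H. destruct (INR_unbounded (/ dl)) as [N HN]. exists N.
  pose proof (pos_INR N). pose proof (Rinv_0_lt_compat dl H).
  rewrite <- (Rinv_inv dl). apply Rinv_lt_contravar; [apply Rmult_lt_0_compat|]; lra.
Qed.

Lemma inv_succ_le (n m : nat) : (n <= m)%nat -> / (INR m + 1) <= / (INR n + 1).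
Proof.
  intros H. apply le_INR in H. pose proof (pos_INR n). apply Rinv_le_contravar; lra.
Qed.

Definition strict_incr (phi : nat -> nat) := forall n, (phi n < phi (S n))%nat.

Lemma strict_incr_lt phi : strict_incr phi -> forall n m, (n < m)%nat -> (phi n < phi m)%nat.
Proof.
  intros H n m Hnm. induction Hnm as [|m Hnm IH]; [apply H|]. specialize (H m). lia.
Qed.

Lemma strict_incr_ge phi : strict_incr phi -> forall n, (n <= phi n)%nat.
Proof. intros H n. induction n as [|n IH]; [lia|]. specialize (H n). lia. Qed.

Lemma strict_incr_comp phi psi :
  strict_incr phi -> strict_incr psi -> strict_incr (fun n => phi (psi n)).
Proof. intros H1 H2 n. apply strict_incr_lt; auto. Qed.

Lemma Un_cv_subseq a l phi : strict_incr phi -> Un_cv a l -> Un_cv (fun n => a (phi n)) l.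
Proof.
  intros Hs Hc eps He. destruct (Hc eps He) as [N HN]. exists N. intros n Hn.
  apply HN. pose proof (strict_incr_ge phi Hs n). lia.
Qed.

(* From an adherence value (Stdlib's Bolzano-Weierstrass) we extract a subsequence
   whose [k]-th term is within [1/(k+1)] of it. *)
Lemma bolzano_weierstrass_subseq (a : nat -> R) B : (forall n, Rabs (a n) <= B) ->
  exists phi l, strict_incr phi /\ Un_cv (fun n => a (phi n)) l.
Proof.
  intros HB.
  destruct (Bolzano_Weierstrass a (fun c => - B <= c <= B) (compact_P3 (- B) B)) as [l Hl].
  { intros n. apply Rabs_le_bounds, HB. }
  assert (G : forall k N : nat, {p : nat | (N <= p)%nat /\ Rabs (a p - l) < / (INR k + 1)}).
  { intros k N. apply constructive_indefinite_description.
    assert (Hpos : 0 < / (INR k + 1)) by (apply Rinv_0_lt_compat; pose proof (pos_INR k); lra).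
    destruct (Hl (disc l (mkposreal _ Hpos)) N) as [p [Hp1 Hp2]].
    - exists (mkposreal _ Hpos). intros y Hy. exact Hy.
    - exists p. auto. }
  set (phi := fix phi k := match k with
                           | O => proj1_sig (G O O)
                           | S k' => proj1_sig (G (S k') (S (phi k')))
                           end).
  assert (Hphi : forall n, Rabs (a (phi n) - l) < / (INR n + 1)).
  { intros [|n]; [exact (proj2 (proj2_sig (G O O))) | exact (proj2 (proj2_sig (G (S n) _)))]. }
  exists phi, l. split.
  - intros n. exact (proj1 (proj2_sig (G (S n) (S (phi n))))).
  - intros eps He. destruct (exists_inv_succ_lt eps He) as [N HN]. exists N. intros n Hn.
    specialize (Hphi n). pose proof (inv_succ_le N n Hn). unfold R_dist. lra.
Qed.

Lemma bolzano_weierstrass_coords (y : nat -> nat -> R) :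
  (forall i, exists B, forall n, Rabs (y n i) <= B) ->
  forall k, exists phi z, strict_incr phi /\
    forall i, (i < k)%nat -> Un_cv (fun n => y (phi n) i) (z i).
Proof.
  intros HB k. induction k as [|k IH].
  - exists (fun n => n), (fun _ => 0). split; [intros n; lia | intros; lia].
  - destruct IH as [phi [z [Hs Hc]]]. destruct (HB k) as [B HBk].
    destruct (bolzano_weierstrass_subseq (fun n => y (phi n) k) B) as [psi [l [Hps Hcl]]];
      [intros; apply HBk|].
    exists (fun n => phi (psi n)), (fun i => if Nat.eq_dec i k then l else z i).
    split; [apply strict_incr_comp; auto|].
    intros i Hi. destruct (Nat.eq_dec i k) as [->|Hne]; [exact Hcl|].
    apply (Un_cv_subseq (fun n => y (phi n) i)); auto. apply Hc. lia.
Qed.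

Lemma Un_cv_uniform_fin (a : nat -> nat -> R) (z : nat -> R) k :
  (forall i, (i < k)%nat -> Un_cv (fun n => a n i) (z i)) ->
  forall eps, 0 < eps -> exists N, forall n i, (N <= n)%nat -> (i < k)%nat -> Rabs (a n i - z i) < eps.
Proof.
  induction k as [|k IH]; intros H eps He; [exists O; intros; lia|].
  destruct (IH (fun i Hi => H i ltac:(lia)) eps He) as [N1 HN1].
  destruct (H k ltac:(lia) eps He) as [N2 HN2].
  exists (max N1 N2). intros n i Hn Hi. destruct (Nat.eq_dec i k) as [->|Hne].
  - apply HN2. lia.
  - apply HN1; lia.
Qed.

Section Compactness.
Variable d : nat.

Lemma bolzano_weierstrass_Rd (y : nat -> Rd d) :
  (forall i, exists B, forall n, Rabs (proj1_sig (y n) i) <= B) ->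
  exists phi (z : Rd d), strict_incr phi /\
    forall eps, 0 < eps -> exists N, forall n, (N <= n)%nat -> vdist (y (phi n)) z < eps.
Proof.
  intros HB. destruct (bolzano_weierstrass_coords (fun n i => proj1_sig (y n) i) HB d)
    as [phi [z [Hs Hc]]].
  exists phi, (Rd_of z). split; auto. intros eps He. pose proof (pos_INR d).
  set (e := eps / (INR d + 1)). assert (0 < e) by (apply Rdiv_lt_0_compat; lra).
  destruct (Un_cv_uniform_fin (fun n i => proj1_sig (y (phi n)) i) z d Hc e) as [N HN]; auto.
  exists N. intros n Hn. eapply Rle_lt_trans.
  - apply (vnorm_le_coord_bound d _ e); [lra|].
    intros i Hi. rewrite Rd_of_coord by auto. left. apply HN; auto.
  - unfold e. apply (Rmult_lt_reg_r (INR d + 1)); [lra|].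
    field_simplify; [nra | lra].
Qed.

Variable Om : Rd d -> Prop.

(* A property holding eventually and locally around every point of a closed ball
   holds eventually and uniformly on it: otherwise a sequence of bad points would
   have a limit point in the ball, around which the property fails. *)
Lemma eventually_uniform_on_ball (x : Clos Om) rho (g : R -> Clos Om -> Prop) : 0 < rho ->
  (forall z : Clos Om, cdist z x <= rho ->
     exists dl, 0 < dl /\ forall h y, 0 < h < dl -> cdist y z < dl -> g h y) ->
  exists h0, 0 < h0 /\ forall h y, 0 < h < h0 -> cdist y x < rho -> g h y.
Proof.
  intros Hr Hloc. apply NNPP. intros Hno.
  assert (bad : forall n : nat, {p : R * Clos Om |
             0 < fst p < / (INR n + 1) /\ cdist (snd p) x < rho /\ ~ g (fst p) (snd p)}).
  { intros n. apply constructive_indefinite_description. apply NNPP. intros Hn. apply Hno.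
    exists (/ (INR n + 1)). split; [apply Rinv_0_lt_compat; pose proof (pos_INR n); lra|].
    intros h y Hh Hy. apply NNPP. intros Hg. apply Hn. exists (h, y). auto. }
  set (ys := fun n => snd (proj1_sig (bad n))).
  assert (Hys : forall n, cdist (ys n) x < rho) by (intros n; apply (proj2_sig (bad n))).
  destruct (bolzano_weierstrass_Rd (fun n => proj1_sig (ys n))) as [phi [z [Hs Hc]]].
  { intros i. exists (rho + Rabs (proj1_sig (proj1_sig x) i)). intros n.
    pose proof (Rabs_pos (proj1_sig (proj1_sig x) i)).
    destruct (Compare_dec.lt_dec i d) as [Hi|Hi].
    - pose proof (Rabs_coord_le_vnorm d
        (fun j => proj1_sig (proj1_sig (ys n)) j - proj1_sig (proj1_sig x) j) i Hi) as Hc.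
      pose proof (Rabs_triang_inv (proj1_sig (proj1_sig (ys n)) i) (proj1_sig (proj1_sig x) i)).
      specialize (Hys n). unfold cdist, vdist in Hys. simpl in Hc. lra.
    - rewrite (proj2_sig (proj1_sig (ys n))), Rabs_R0 by lia. lra. }
  assert (Hzc : closure Om z).
  { apply closure_of_approx. intros eps He. destruct (Hc eps He) as [N HN].
    exists (ys (phi N)). rewrite vdist_sym. apply HN. lia. }
  set (zc := exist _ z Hzc : Clos Om).
  assert (Hzx : cdist zc x <= rho).
  { apply Rnot_lt_le. intros Hlt. destruct (Hc (cdist zc x - rho)) as [N HN]; [lra|].
    specialize (HN N (le_n _)). specialize (Hys (phi N)).
    pose proof (vdist_tri z (proj1_sig (ys (phi N))) (proj1_sig x)).
    unfold cdist in *. simpl in *. rewrite vdist_sym in HN. lra. }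
  destruct (Hloc zc Hzx) as [dl [Hdl Hg]].
  destruct (exists_inv_succ_lt dl Hdl) as [N1 HN1]. destruct (Hc dl Hdl) as [N2 HN2].
  set (n := max N1 N2).
  destruct (proj2_sig (bad (phi n))) as [Hh [_ Hng]]. apply Hng, Hg.
  - pose proof (strict_incr_ge phi Hs n). pose proof (inv_succ_le N1 (phi n) ltac:(lia)). lra.
  - apply HN2. lia.
Qed.
End Compactness.

Section Differentiability.
Variable d : nat.

Definition is_grad (a : Rd d -> R) (b : nat -> R) (x : Rd d) : Prop :=
  forall eps, 0 < eps -> exists dl, 0 < dl /\ forall y, vdist y x < dl ->
    Rabs (a y - a x - sumR d (fun j => b j * (proj1_sig y j - proj1_sig x j))) <= eps * vdist y x.

Definition cont_at (a : Rd d -> R) (x : Rd d) : Prop :=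
  forall eps, 0 < eps -> exists dl, 0 < dl /\ forall y, vdist y x < dl -> Rabs (a y - a x) < eps.

Lemma is_grad_lipschitz a b x : is_grad a b x -> exists dl, 0 < dl /\ forall y, vdist y x < dl ->
  Rabs (a y - a x) <= (sumR d (fun j => Rabs (b j)) + 1) * vdist y x.
Proof.
  intros H. destruct (H 1) as [dl [Hdl Hy]]; [lra|]. exists dl. split; auto. intros y Hyx.
  specialize (Hy y Hyx).
  pose proof (Rabs_dot_le d b (fun j => proj1_sig y j - proj1_sig x j)) as Hdot.
  fold (vdist y x) in Hdot.
  set (l := sumR d (fun j => b j * (proj1_sig y j - proj1_sig x j))) in *.
  pose proof (Rabs_triang (a y - a x - l) l) as Htri.
  replace (a y - a x - l + l) with (a y - a x) in Htri by ring.
  lra.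
Qed.

Lemma is_grad_cont a b x : is_grad a b x -> cont_at a x.
Proof.
  intros H eps He. destruct (is_grad_lipschitz a b x H) as [dl [Hdl Hy]].
  set (L := sumR d (fun j => Rabs (b j)) + 1) in Hy.
  assert (HL : 1 <= L) by (assert (0 <= sumR d (fun j => Rabs (b j))) by
                             (apply sumR_nonneg; intros; apply Rabs_pos); unfold L; lra).
  exists (Rmin dl (eps / L)). split; [apply Rmin_pos; [|apply Rdiv_lt_0_compat]; lra|].
  intros y Hyx. apply Rmin_Rgt in Hyx as [H1 H2]. specialize (Hy y H1).
  apply (Rmult_lt_compat_l L) in H2; [|lra]. field_simplify in H2; lra.
Qed.

Lemma is_grad_ext_grad a b b' x : (forall j, (j < d)%nat -> b j = b' j) -> is_grad a b x -> is_grad a b' x.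
Proof.
  intros E H eps He. destruct (H eps He) as [dl [Hdl Hy]]. exists dl. split; auto. intros y Hyx.
  rewrite (sumR_ext _ _ (fun j => b j * (proj1_sig y j - proj1_sig x j))); auto.
  intros j Hj. rewrite E; auto.
Qed.

Lemma is_grad_ext a a' b x : (forall y, a y = a' y) -> is_grad a b x -> is_grad a' b x.
Proof. intros E. replace a' with a by (apply functional_extensionality; auto). auto. Qed.

Lemma cont_at_ext a a' x : (forall y, a y = a' y) -> cont_at a x -> cont_at a' x.
Proof. intros E. replace a' with a by (apply functional_extensionality; auto). auto. Qed.

Lemma cont_at_const c x : cont_at (fun _ => c) x.
Proof. intros eps He. exists 1. split; [lra|]. intros. rewrite Rminus_diag, Rabs_R0. auto. Qed.

Lemma cont_at_add a c x : cont_at a x -> cont_at c x -> cont_at (fun y => a y + c y) x.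
Proof.
  intros Ha Hc eps He.
  destruct (Ha (eps / 2)) as [d1 [Hd1 H1]]; [lra|]. destruct (Hc (eps / 2)) as [d2 [Hd2 H2]]; [lra|].
  exists (Rmin d1 d2). split; [apply Rmin_pos; auto|]. intros y Hy. apply Rmin_Rgt in Hy as [Hy1 Hy2].
  specialize (H1 y Hy1). specialize (H2 y Hy2).
  replace (a y + c y - (a x + c x)) with ((a y - a x) + (c y - c x)) by ring.
  eapply Rle_lt_trans; [apply Rabs_triang | lra].
Qed.

Lemma cont_at_mul a c x : cont_at a x -> cont_at c x -> cont_at (fun y => a y * c y) x.
Proof.
  intros Ha Hc eps He.
  set (K := Rabs (a x) + Rabs (c x) + 1).
  pose proof (Rabs_pos (a x)). pose proof (Rabs_pos (c x)).
  set (e := Rmin 1 (eps / (4 * K))).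
  assert (He' : 0 < e) by (apply Rmin_pos; [|apply Rdiv_lt_0_compat]; unfold K; lra).
  assert (He1 : e <= 1) by apply Rmin_l. assert (He2 : e * (4 * K) <= eps).
  { pose proof (Rmin_r 1 (eps / (4 * K))) as Hm. fold e in Hm.
    apply (Rmult_le_compat_r (4 * K)) in Hm; [|unfold K; lra].
    replace (eps / (4 * K) * (4 * K)) with eps in Hm by (field; unfold K; lra). exact Hm. }
  destruct (Ha e He') as [d1 [Hd1 H1]]. destruct (Hc e He') as [d2 [Hd2 H2]].
  exists (Rmin d1 d2). split; [apply Rmin_pos; auto|]. intros y Hy. apply Rmin_Rgt in Hy as [Hy1 Hy2].
  specialize (H1 y Hy1). specialize (H2 y Hy2).
  replace (a y * c y - a x * c x) with ((a y - a x) * c y + a x * (c y - c x)) by ring.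
  eapply Rle_lt_trans; [apply Rabs_triang|]. rewrite !Rabs_mult.
  assert (Rabs (c y) <= Rabs (c x) + 1).
  { pose proof (Rabs_triang (c y - c x) (c x)). replace (c y - c x + c x) with (c y) in * by ring. lra. }
  assert (Rabs (a y - a x) * Rabs (c y) <= e * K)
    by (apply Rmult_le_compat; try apply Rabs_pos; unfold K; lra).
  assert (Rabs (a x) * Rabs (c y - c x) <= K * e)
    by (apply Rmult_le_compat; try apply Rabs_pos; unfold K; lra).
  lra.
Qed.

Lemma cont_at_opp a x : cont_at a x -> cont_at (fun y => - a y) x.
Proof.
  intros H eps He. destruct (H eps He) as [dl [Hdl Hy]]. exists dl. split; auto. intros y Hyx.
  replace (- a y - - a x) with (- (a y - a x)) by ring. rewrite Rabs_Ropp. auto.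
Qed.

Lemma is_grad_add a b c e x :
  is_grad a b x -> is_grad c e x -> is_grad (fun y => a y + c y) (fun j => b j + e j) x.
Proof.
  intros Ha Hc eps He.
  destruct (Ha (eps / 2)) as [d1 [Hd1 H1]]; [lra|]. destruct (Hc (eps / 2)) as [d2 [Hd2 H2]]; [lra|].
  exists (Rmin d1 d2). split; [apply Rmin_pos; auto|]. intros y Hy. apply Rmin_Rgt in Hy as [Hy1 Hy2].
  specialize (H1 y Hy1). specialize (H2 y Hy2).
  rewrite (sumR_ext _ _ (fun j => b j * (proj1_sig y j - proj1_sig x j)
                                  + e j * (proj1_sig y j - proj1_sig x j))), sumR_add by (intros; ring).
  match goal with |- Rabs ?E <= _ =>
    replace E with ((a y - a x - sumR d (fun j => b j * (proj1_sig y j - proj1_sig x j)))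
                    + (c y - c x - sumR d (fun j => e j * (proj1_sig y j - proj1_sig x j)))) by ring end.
  eapply Rle_trans; [apply Rabs_triang | lra].
Qed.

(* Leibniz rule, with the remainder split as [a x rc + c x ra + (a y - a x)(c y - c x)]. *)
Lemma is_grad_mul a c b e x : is_grad a b x -> is_grad c e x ->
  is_grad (fun y => a y * c y) (fun j => a x * e j + c x * b j) x.
Proof.
  intros Ha Hc eps He.
  destruct (is_grad_lipschitz a b x Ha) as [d0 [Hd0 Hlip]].
  set (L := sumR d (fun j => Rabs (b j)) + 1) in Hlip.
  assert (0 <= sumR d (fun j => Rabs (b j))) by (apply sumR_nonneg; intros; apply Rabs_pos).
  pose proof (Rabs_pos (a x)). pose proof (Rabs_pos (c x)).
  set (K := Rabs (a x) + Rabs (c x) + L).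
  assert (HK : 1 <= K) by (unfold K, L; lra).
  set (e1 := eps / (3 * K)). assert (He1 : 0 < e1) by (apply Rdiv_lt_0_compat; lra).
  assert (HKe : K * e1 = eps / 3) by (unfold e1; field; lra).
  destruct (Ha e1 He1) as [d1 [Hd1 Ra]]. destruct (Hc e1 He1) as [d2 [Hd2 Rc]].
  destruct (is_grad_cont c e x Hc e1 He1) as [d3 [Hd3 H3]].
  exists (Rmin (Rmin d0 d1) (Rmin d2 d3)). split; [repeat apply Rmin_pos; auto|].
  intros y Hy. apply Rmin_Rgt in Hy as [Hy Hy']. apply Rmin_Rgt in Hy as [Y0 Y1].
  apply Rmin_Rgt in Hy' as [Y2 Y3].
  specialize (Hlip y Y0). specialize (Ra y Y1). specialize (Rc y Y2). specialize (H3 y Y3).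
  pose proof (vdist_nonneg y x) as Dn.
  rewrite (sumR_ext _ _ (fun j => a x * (e j * (proj1_sig y j - proj1_sig x j))
                                  + c x * (b j * (proj1_sig y j - proj1_sig x j)))), sumR_add,
    !sumR_scal by (intros; ring).
  set (ra := a y - a x - sumR d (fun j => b j * (proj1_sig y j - proj1_sig x j))) in *.
  set (rc := c y - c x - sumR d (fun j => e j * (proj1_sig y j - proj1_sig x j))) in *.
  match goal with |- Rabs ?E <= _ =>
    replace E with (a x * rc + c x * ra + (a y - a x) * (c y - c x)) by (unfold ra, rc; ring) end.
  assert (T1 : Rabs (a x * rc) <= K * (e1 * vdist y x))
    by (rewrite Rabs_mult; apply Rmult_le_compat; try apply Rabs_pos; unfold K, L; lra).
  assert (T2 : Rabs (c x * ra) <= K * (e1 * vdist y x))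
    by (rewrite Rabs_mult; apply Rmult_le_compat; try apply Rabs_pos; unfold K, L; lra).
  assert (T3 : Rabs ((a y - a x) * (c y - c x)) <= K * vdist y x * e1).
  { rewrite Rabs_mult. apply Rmult_le_compat; try apply Rabs_pos; [|lra].
    eapply Rle_trans; [apply Hlip|]. apply Rmult_le_compat_r; auto. unfold K. lra. }
  pose proof (Rabs_triang (a x * rc + c x * ra) ((a y - a x) * (c y - c x))).
  pose proof (Rabs_triang (a x * rc) (c x * ra)).
  assert (K * (e1 * vdist y x) = eps / 3 * vdist y x) by (rewrite <- HKe; ring).
  nra.
Qed.

Definition is_deriv1 (g : R -> R) (v t : R) : Prop :=
  forall eps, 0 < eps -> exists dl, 0 < dl /\ forall u, Rabs (u - t) < dl ->
    Rabs (g u - g t - v * (u - t)) <= eps * Rabs (u - t).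

Definition cont_at1 (g : R -> R) (t : R) : Prop :=
  forall eps, 0 < eps -> exists dl, 0 < dl /\ forall u, Rabs (u - t) < dl -> Rabs (g u - g t) < eps.

Lemma is_deriv1_cont g v t : is_deriv1 g v t -> cont_at1 g t.
Proof.
  intros H eps He. destruct (H 1) as [dl [Hdl Hu]]; [lra|].
  set (K := Rabs v + 1). assert (1 <= K) by (pose proof (Rabs_pos v); unfold K; lra).
  exists (Rmin dl (eps / (2 * K))). split; [apply Rmin_pos; [|apply Rdiv_lt_0_compat]; lra|].
  intros u Hut. apply Rmin_Rgt in Hut as [A1 A2]. specialize (Hu u A1).
  pose proof (Rabs_triang (g u - g t - v * (u - t)) (v * (u - t))) as Htri.
  replace (g u - g t - v * (u - t) + v * (u - t)) with (g u - g t) in Htri by ring.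
  rewrite Rabs_mult in Htri. pose proof (Rabs_pos (u - t)).
  apply (Rmult_lt_compat_l (2 * K)) in A2; [|lra]. field_simplify in A2; [|lra].
  assert (Rabs v * Rabs (u - t) <= K * Rabs (u - t)) by (apply Rmult_le_compat_r; unfold K; lra).
  nra.
Qed.

Lemma cont_at_comp a g x : cont_at a x -> cont_at1 g (a x) -> cont_at (fun y => g (a y)) x.
Proof.
  intros Ha Hg eps He. destruct (Hg eps He) as [dg [Hdg Hg1]]. destruct (Ha dg Hdg) as [dl [Hdl H]].
  exists dl. split; auto.
Qed.

Lemma is_grad_comp a b g v x : is_grad a b x -> is_deriv1 g v (a x) ->
  is_grad (fun y => g (a y)) (fun j => v * b j) x.
Proof.
  intros Ha Hg eps He.
  destruct (is_grad_lipschitz a b x Ha) as [d0 [Hd0 Hlip]].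
  set (L := sumR d (fun j => Rabs (b j)) + 1) in Hlip.
  assert (0 <= sumR d (fun j => Rabs (b j))) by (apply sumR_nonneg; intros; apply Rabs_pos).
  pose proof (Rabs_pos v).
  set (K := Rabs v + L). assert (HK : 1 <= K) by (unfold K, L; lra).
  set (e1 := eps / (2 * K)). assert (He1 : 0 < e1) by (apply Rdiv_lt_0_compat; lra).
  assert (HKe : K * e1 = eps / 2) by (unfold e1; field; lra).
  destruct (Hg e1 He1) as [dg [Hdg Hg1]].
  destruct (is_grad_cont a b x Ha dg Hdg) as [d3 [Hd3 H3]].
  destruct (Ha e1 He1) as [d1 [Hd1 H1]].
  exists (Rmin d0 (Rmin d1 d3)). split; [repeat apply Rmin_pos; auto|].
  intros y Hy. apply Rmin_Rgt in Hy as [Y0 Hy]. apply Rmin_Rgt in Hy as [Y1 Y3].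
  specialize (Hlip y Y0). specialize (H1 y Y1). specialize (Hg1 (a y) (H3 y Y3)).
  pose proof (vdist_nonneg y x).
  rewrite (sumR_ext _ _ (fun j => v * (b j * (proj1_sig y j - proj1_sig x j)))), sumR_scal
    by (intros; ring).
  set (ra := a y - a x - sumR d (fun j => b j * (proj1_sig y j - proj1_sig x j))) in *.
  match goal with |- Rabs ?E <= _ =>
    replace E with ((g (a y) - g (a x) - v * (a y - a x)) + v * ra) by (unfold ra; ring) end.
  assert (T1 : Rabs (g (a y) - g (a x) - v * (a y - a x)) <= e1 * (K * vdist y x)).
  { eapply Rle_trans; [apply Hg1|]. apply Rmult_le_compat_l; [lra|].
    eapply Rle_trans; [apply Hlip|]. apply Rmult_le_compat_r; auto. unfold K. lra. }
  assert (T2 : Rabs (v * ra) <= K * (e1 * vdist y x)).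
  { rewrite Rabs_mult. apply Rmult_le_compat; try apply Rabs_pos; auto. unfold K, L. lra. }
  pose proof (Rabs_triang (g (a y) - g (a x) - v * (a y - a x)) (v * ra)).
  assert (K * (e1 * vdist y x) = eps / 2 * vdist y x) by (rewrite <- HKe; ring).
  nra.
Qed.
End Differentiability.

Arguments is_grad {d}. Arguments cont_at {d}.

Lemma exists_common_delta k (P : nat -> R -> Prop) :
  (forall i dl dl', 0 < dl' <= dl -> P i dl -> P i dl') ->
  (forall i, (i < k)%nat -> exists dl, 0 < dl /\ P i dl) ->
  exists dl, 0 < dl /\ forall i, (i < k)%nat -> P i dl.
Proof.
  intros Hmono. induction k as [|k IH]; intros H; [exists 1; split; [lra | intros; lia]|].
  destruct IH as [d1 [Hd1 H1]]; [intros; apply H; lia|].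
  destruct (H k ltac:(lia)) as [d2 [Hd2 H2]].
  exists (Rmin d1 d2). split; [apply Rmin_pos; auto|]. intros i Hi.
  destruct (Nat.eq_dec i k) as [->|Hne].
  - apply (Hmono k d2); [split; [apply Rmin_pos | apply Rmin_r]|]; auto.
  - apply (Hmono i d1); [split; [apply Rmin_pos | apply Rmin_l]|]; auto. apply H1. lia.
Qed.

Section C2.
Variable d : nat.

Definition C2_at (f : Rd d -> R) (Df : Rd d -> Rd d) (D2f : Rd d -> Sym d) (x : Rd d) : Prop :=
  has_grad f Df x /\ has_hess Df D2f x /\ cont_sym D2f x.

Lemma Rd_ext (a b : Rd d) : (forall i, (i < d)%nat -> proj1_sig a i = proj1_sig b i) -> a = b.
Proof.
  destruct a as [a Ha], b as [b Hb]. simpl. intros H. apply subset_eq_compat.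
  apply functional_extensionality. intros i. destruct (Compare_dec.lt_dec i d); auto.
  rewrite Ha, Hb by lia. reflexivity.
Qed.

Lemma Sym_ext (a b : Sym d) :
  (forall i j, (i < d)%nat -> (j < d)%nat -> proj1_sig a i j = proj1_sig b i j) -> a = b.
Proof.
  destruct a as [a [Sa Ha]], b as [b [Sb Hb]]. simpl. intros H. apply subset_eq_compat.
  apply functional_extensionality. intros i. apply functional_extensionality. intros j.
  destruct (Compare_dec.lt_dec i d); [destruct (Compare_dec.lt_dec j d); auto|].
  - rewrite Sa, Sb, Ha, Hb by lia. reflexivity.
  - rewrite Ha, Hb by lia. reflexivity.
Qed.

Lemma Sym_sym (M : Sym d) i j : proj1_sig M i j = proj1_sig M j i.
Proof. apply (proj1 (proj2_sig M)). Qed.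

Definition sym_of (M : nat -> nat -> R) : Sym d.
Proof.
  exists (fun i j => if Compare_dec.lt_dec i d then
                       if Compare_dec.lt_dec j d then (M i j + M j i) / 2 else 0
                     else 0).
  split.
  - intros i j. destruct (Compare_dec.lt_dec i d), (Compare_dec.lt_dec j d); auto; lra.
  - intros i j Hi. destruct (Compare_dec.lt_dec i d); [lia | reflexivity].
Defined.

Lemma sym_of_entry M i j : (i < d)%nat -> (j < d)%nat -> proj1_sig (sym_of M) i j = (M i j + M j i) / 2.
Proof.
  intros Hi Hj. simpl. destruct (Compare_dec.lt_dec i d); [|lia].
  destruct (Compare_dec.lt_dec j d); [reflexivity | lia].
Qed.

Lemma has_hess_coord (Df : Rd d -> Rd d) (D2f : Rd d -> Sym d) x :
  has_hess Df D2f x -> forall i, (i < d)%nat ->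
  is_grad (fun y => proj1_sig (Df y) i) (proj1_sig (D2f x) i) x.
Proof.
  intros H i Hi eps He. destruct (H eps He) as [dl [Hdl Hy]]. exists dl. split; auto.
  intros y Hyx. eapply Rle_trans; [| apply (Hy y Hyx)].
  apply (Rabs_coord_le_vnorm d (fun i => proj1_sig (Df y) i - proj1_sig (Df x) i -
     sumR d (fun j => proj1_sig (D2f x) i j * (proj1_sig y j - proj1_sig x j))) i Hi).
Qed.

Lemma has_hess_of_coords (Df : Rd d -> Rd d) (D2f : Rd d -> Sym d) x :
  (forall i, (i < d)%nat -> is_grad (fun y => proj1_sig (Df y) i) (proj1_sig (D2f x) i) x) ->
  has_hess Df D2f x.
Proof.
  intros H eps He. pose proof (pos_INR d).
  set (e := eps / (INR d + 1)). assert (0 < e) by (apply Rdiv_lt_0_compat; lra).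
  destruct (exists_common_delta d (fun i dl => forall y, vdist y x < dl ->
     Rabs (proj1_sig (Df y) i - proj1_sig (Df x) i
           - sumR d (fun j => proj1_sig (D2f x) i j * (proj1_sig y j - proj1_sig x j)))
     <= e * vdist y x)) as [dl [Hdl Hy]].
  { intros i a b Hab Ha y Hy. apply Ha. lra. }
  { intros i Hi. apply (H i Hi e); auto. }
  exists dl. split; auto. intros y Hyx. pose proof (vdist_nonneg y x).
  eapply Rle_trans; [apply vnorm_le_coord_bound with (c := e * vdist y x); [nra|]|].
  - intros i Hi. apply Hy; auto.
  - rewrite <- Rmult_assoc. apply Rmult_le_compat_r; auto. unfold e.
    apply (Rmult_le_reg_r (INR d + 1)); [lra|]. field_simplify; lra.
Qed.

Lemma cont_sym_entry (D2f : Rd d -> Sym d) x : cont_sym D2f x -> forall i j, (i < d)%nat -> (j < d)%nat ->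
  cont_at (fun y => proj1_sig (D2f y) i j) x.
Proof.
  intros H i j Hi Hj eps He. destruct (H eps He) as [dl [Hdl Hy]]. exists dl. split; auto.
  intros y Hyx. eapply Rle_lt_trans; [| apply (Hy y Hyx)].
  apply (Rabs_entry_le_mnorm d (fun i j => proj1_sig (D2f y) i j - proj1_sig (D2f x) i j) i j Hi Hj).
Qed.

Lemma cont_sym_of_entries (D2f : Rd d -> Sym d) x :
  (forall i j, (i < d)%nat -> (j < d)%nat -> cont_at (fun y => proj1_sig (D2f y) i j) x) ->
  cont_sym D2f x.
Proof.
  intros H eps He. pose proof (pos_INR d).
  set (e := eps / (INR d + 1)). assert (0 < e) by (apply Rdiv_lt_0_compat; lra).
  destruct (exists_common_delta d (fun i dl => forall j, (j < d)%nat -> forall y, vdist y x < dl ->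
     Rabs (proj1_sig (D2f y) i j - proj1_sig (D2f x) i j) < e)) as [dl [Hdl Hy]].
  { intros i a b Hab Ha j Hj y Hy. apply Ha; auto. lra. }
  { intros i Hi. apply (exists_common_delta d (fun j dl => forall y, vdist y x < dl ->
       Rabs (proj1_sig (D2f y) i j - proj1_sig (D2f x) i j) < e)).
    - intros j a b Hab Ha y Hy. apply Ha. lra.
    - intros j Hj. apply (H i j Hi Hj e); auto. }
  exists dl. split; auto. intros y Hyx.
  eapply Rle_lt_trans; [apply mnorm_le_entry_bound with (c := e); [lra|]|].
  - intros i j Hi Hj. left. apply Hy; auto.
  - unfold e. apply (Rmult_lt_reg_r (INR d + 1)); [lra|]. field_simplify; nra.
Qed.

Lemma C2_at_add_const f Df D2f x c : C2_at f Df D2f x -> C2_at (fun y => f y + c) Df D2f x.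
Proof.
  intros [Gf Hf]. split; auto.
  intros eps He. destruct (Gf eps He) as [dl [Hdl Hy]]. exists dl. split; auto. intros y Hyx.
  replace (f y + c - (f x + c)) with (f y - f x) by ring. auto.
Qed.

Lemma C2_at_mul f Df D2f g Dg D2g x : C2_at f Df D2f x -> C2_at g Dg D2g x ->
  C2_at (fun y => f y * g y)
    (fun y => Rd_of (fun j => f y * proj1_sig (Dg y) j + g y * proj1_sig (Df y) j))
    (fun y => sym_of (fun i j => f y * proj1_sig (D2g y) i j + g y * proj1_sig (D2f y) i j
               + proj1_sig (Df y) i * proj1_sig (Dg y) j + proj1_sig (Dg y) i * proj1_sig (Df y) j)) x.
Proof.
  intros [Gf [Hf Cf]] [Gg [Hg Cg]]. split; [|split].
  - eapply is_grad_ext_grad; [| apply (is_grad_mul d f g _ _ x Gf Gg)].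
    intros j Hj. rewrite Rd_of_coord by auto. reflexivity.
  - apply has_hess_of_coords. intros i Hi.
    apply (is_grad_ext d (fun y => f y * proj1_sig (Dg y) i + g y * proj1_sig (Df y) i));
      [intros y; rewrite Rd_of_coord; auto|].
    eapply is_grad_ext_grad; [| apply is_grad_add;
      [apply (is_grad_mul d f _ _ _ x Gf (has_hess_coord Dg D2g x Hg i Hi))
      |apply (is_grad_mul d g _ _ _ x Gg (has_hess_coord Df D2f x Hf i Hi))]].
    intros j Hj. rewrite sym_of_entry by auto.
    rewrite (Sym_sym (D2g x) j i), (Sym_sym (D2f x) j i). field.
  - apply cont_sym_of_entries. intros i j Hi Hj.
    apply (cont_at_ext d (fun y => f y * proj1_sig (D2g y) i j + g y * proj1_sig (D2f y) i j
             + proj1_sig (Df y) i * proj1_sig (Dg y) j + proj1_sig (Dg y) i * proj1_sig (Df y) j)).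
    { intros y. rewrite sym_of_entry by auto. rewrite (Sym_sym (D2g y) j i), (Sym_sym (D2f y) j i). field. }
    pose proof (has_hess_coord Df D2f x Hf) as HDf. pose proof (has_hess_coord Dg D2g x Hg) as HDg.
    repeat apply cont_at_add; apply cont_at_mul;
      eauto using is_grad_cont, cont_sym_entry.
Qed.

Lemma C2_at_comp f Df D2f x g g1 g2 :
  C2_at f Df D2f x -> is_deriv1 g (g1 (f x)) (f x) -> is_deriv1 g1 (g2 (f x)) (f x) ->
  cont_at1 g2 (f x) ->
  C2_at (fun y => g (f y)) (fun y => Rd_of (fun j => g1 (f y) * proj1_sig (Df y) j))
    (fun y => sym_of (fun i j => g2 (f y) * proj1_sig (Df y) i * proj1_sig (Df y) j
                                 + g1 (f y) * proj1_sig (D2f y) i j)) x.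
Proof.
  intros [Gf [Hf Cf]] Hg Hg1 Hg2. split; [|split].
  - eapply is_grad_ext_grad; [| apply (is_grad_comp d f _ g _ x Gf Hg)].
    intros j Hj. rewrite Rd_of_coord by auto. reflexivity.
  - apply has_hess_of_coords. intros i Hi.
    apply (is_grad_ext d (fun y => g1 (f y) * proj1_sig (Df y) i)); [intros y; rewrite Rd_of_coord; auto|].
    eapply is_grad_ext_grad;
      [| apply (is_grad_mul d (fun y => g1 (f y)) (fun y => proj1_sig (Df y) i) _ _ x
                  (is_grad_comp d f _ g1 _ x Gf Hg1) (has_hess_coord Df D2f x Hf i Hi))].
    intros j Hj. rewrite sym_of_entry by auto. rewrite (Sym_sym (D2f x) j i). field.
  - apply cont_sym_of_entries. intros i j Hi Hj.
    apply (cont_at_ext d (fun y => g2 (f y) * proj1_sig (Df y) i * proj1_sig (Df y) j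
                                   + g1 (f y) * proj1_sig (D2f y) i j)).
    { intros y. rewrite sym_of_entry by auto. rewrite (Sym_sym (D2f y) j i). field. }
    pose proof (has_hess_coord Df D2f x Hf) as HDf. pose proof (is_grad_cont d _ _ _ Gf) as Cf0.
    apply cont_at_add; repeat apply cont_at_mul;
      eauto using is_grad_cont, cont_sym_entry, cont_at_comp, is_deriv1_cont.
Qed.

Definition sqdist (x0 y : Rd d) : R := sumR d (fun i => (proj1_sig y i - proj1_sig x0 i) ^ 2).

Lemma sqdist_eq x0 y : sqdist x0 y = vdist y x0 ^ 2.
Proof. unfold vdist. rewrite vnorm_sq. reflexivity. Qed.

Lemma C2_at_sqdist x0 x : C2_at (sqdist x0) (fun y => Rd_of (fun i => 2 * (proj1_sig y i - proj1_sig x0 i)))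
  (fun _ => sym_of (fun i j => if Nat.eq_dec i j then 2 else 0)) x.
Proof.
  split; [|split].
  - intros eps He. exists eps. split; auto. intros y Hy. pose proof (vdist_nonneg y x).
    rewrite (sumR_ext d _ (fun j => 2 * (proj1_sig x j - proj1_sig x0 j) * (proj1_sig y j - proj1_sig x j)))
      by (intros j Hj; rewrite Rd_of_coord; auto).
    unfold sqdist. rewrite <- !sumR_sub.
    rewrite (sumR_ext d _ (fun j => (proj1_sig y j - proj1_sig x j) ^ 2)) by (intros; ring).
    fold (vnorm d (fun j => proj1_sig y j - proj1_sig x j)) (vdist y x).
    rewrite <- vnorm_sq. fold (vdist y x). rewrite Rabs_pos_eq by nra. nra.
  - apply has_hess_of_coords. intros i Hi.
    apply (is_grad_ext d (fun y => 2 * (proj1_sig y i - proj1_sig x0 i)));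
      [intros y; rewrite Rd_of_coord; auto|].
    apply (is_grad_ext_grad d _ (fun j => if Nat.eq_dec i j then 2 else 0)).
    { intros j Hj. rewrite sym_of_entry by auto. destruct (Nat.eq_dec i j), (Nat.eq_dec j i); lia || lra. }
    intros eps He. exists 1. split; [lra|]. intros y Hy. rewrite sumR_kronecker by auto.
    replace (2 * (proj1_sig y i - proj1_sig x0 i) - 2 * (proj1_sig x i - proj1_sig x0 i)
             - 2 * (proj1_sig y i - proj1_sig x i)) with 0 by ring.
    rewrite Rabs_R0. pose proof (vdist_nonneg y x). nra.
  - apply cont_sym_of_entries. intros. apply cont_at_const.
Qed.
End C2.

Arguments C2_at {d}.

(** * A C^2 bump and localized test functions *)

Definition quad (k t : R) := 1 - k * t ^ 2.
Definition quad1 (k t : R) := -2 * k * t.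
Definition quad2 (k t : R) := -2 * k.

Definition cube_pos (u : R) := Rmax 0 u ^ 3.
Definition cube_pos1 (u : R) := 3 * Rmax 0 u ^ 2.
Definition cube_pos2 (u : R) := 6 * Rmax 0 u.

Lemma is_deriv1_quad k t : is_deriv1 (quad k) (quad1 k t) t.
Proof.
  intros eps He. pose proof (Rabs_pos k). exists (eps / (Rabs k + 1)).
  split; [apply Rdiv_lt_0_compat; lra|]. intros u Hu.
  unfold quad, quad1. replace (1 - k * u ^ 2 - (1 - k * t ^ 2) - -2 * k * t * (u - t))
    with (- (k * (u - t) ^ 2)) by ring.
  rewrite Rabs_Ropp, Rabs_mult, (Rabs_pos_eq ((u - t) ^ 2)), <- (pow2_abs (u - t))
    by apply pow2_ge_0.
  pose proof (Rabs_pos (u - t)).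
  apply (Rmult_lt_compat_l (Rabs k + 1)) in Hu; [|lra].
  replace ((Rabs k + 1) * (eps / (Rabs k + 1))) with eps in Hu by (field; lra).
  assert (Rabs k * Rabs (u - t) <= eps) by nra.
  replace (Rabs k * Rabs (u - t) ^ 2) with (Rabs k * Rabs (u - t) * Rabs (u - t)) by ring.
  apply Rmult_le_compat_r; auto.
Qed.

Lemma is_deriv1_quad1 k t : is_deriv1 (quad1 k) (quad2 k t) t.
Proof.
  intros eps He. exists 1. split; [lra|]. intros u Hu. unfold quad1, quad2.
  replace (-2 * k * u - -2 * k * t - -2 * k * (u - t)) with 0 by ring.
  rewrite Rabs_R0. pose proof (Rabs_pos (u - t)). nra.
Qed.

Lemma cont_at1_quad2 k t : cont_at1 (quad2 k) t.
Proof. intros eps He. exists 1. split; [lra|]. intros. unfold quad2. rewrite Rminus_diag, Rabs_R0. auto. Qed.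

Lemma cube_pos_taylor t u :
  Rabs (cube_pos u - cube_pos t - cube_pos1 t * (u - t)) <= 3 * (Rabs t + Rabs u) * (u - t) ^ 2.
Proof.
  unfold cube_pos, cube_pos1, Rmax. pose proof (pow2_ge_0 (u - t)).
  destruct (Rle_dec 0 u) as [Hu|Hu], (Rle_dec 0 t) as [Ht|Ht].
  - rewrite (Rabs_pos_eq t), (Rabs_pos_eq u) by lra.
    replace (u ^ 3 - t ^ 3 - 3 * t ^ 2 * (u - t)) with ((u - t) ^ 2 * (u + 2 * t)) by ring.
    rewrite Rabs_pos_eq by (apply Rmult_le_pos; lra). nra.
  - rewrite (Rabs_left t), (Rabs_pos_eq u) by lra.
    replace (u ^ 3 - 0 ^ 3 - 3 * 0 ^ 2 * (u - t)) with (u * u ^ 2) by ring.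
    rewrite Rabs_pos_eq by nra. assert (u ^ 2 <= (u - t) ^ 2) by nra.
    apply Rmult_le_compat; nra.
  - rewrite (Rabs_pos_eq t), (Rabs_left u) by lra.
    replace (0 ^ 3 - t ^ 3 - 3 * t ^ 2 * (u - t)) with (t ^ 2 * (2 * t - 3 * u)) by ring.
    rewrite Rabs_pos_eq by nra. assert (t ^ 2 <= (u - t) ^ 2) by nra.
    rewrite Rmult_comm. apply Rmult_le_compat; nra.
  - replace (0 ^ 3 - 0 ^ 3 - 3 * 0 ^ 2 * (u - t)) with 0 by ring. rewrite Rabs_R0.
    pose proof (Rabs_pos t). pose proof (Rabs_pos u). nra.
Qed.

Lemma cube_pos1_taylor t u : Rabs (cube_pos1 u - cube_pos1 t - cube_pos2 t * (u - t)) <= 6 * (u - t) ^ 2.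
Proof.
  unfold cube_pos1, cube_pos2, Rmax. pose proof (pow2_ge_0 (u - t)). pose proof (pow2_ge_0 u).
  destruct (Rle_dec 0 u) as [Hu|Hu], (Rle_dec 0 t) as [Ht|Ht].
  - replace (3 * u ^ 2 - 3 * t ^ 2 - 6 * t * (u - t)) with (3 * (u - t) ^ 2) by ring.
    rewrite Rabs_pos_eq; lra.
  - replace (3 * u ^ 2 - 3 * 0 ^ 2 - 6 * 0 * (u - t)) with (3 * u ^ 2) by ring.
    assert (u ^ 2 <= (u - t) ^ 2) by nra. rewrite Rabs_pos_eq; lra.
  - replace (3 * 0 ^ 2 - 3 * t ^ 2 - 6 * t * (u - t)) with (3 * t * (t - 2 * u)) by ring.
    assert (0 <= 3 * t * (t - 2 * u)) by (apply Rmult_le_pos; lra).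
    rewrite Rabs_pos_eq; nra.
  - replace (3 * 0 ^ 2 - 3 * 0 ^ 2 - 6 * 0 * (u - t)) with 0 by ring. rewrite Rabs_R0. lra.
Qed.

Lemma is_deriv1_cube_pos t : is_deriv1 cube_pos (cube_pos1 t) t.
Proof.
  intros eps He. pose proof (Rabs_pos t). set (K := 3 * (2 * Rabs t + 1)).
  exists (Rmin 1 (eps / K)). split; [apply Rmin_pos; [|apply Rdiv_lt_0_compat]; unfold K; lra|].
  intros u Hu. apply Rmin_Rgt in Hu as [A1 A2].
  eapply Rle_trans; [apply cube_pos_taylor|]. pose proof (Rabs_pos (u - t)).
  assert (Rabs u <= Rabs t + 1).
  { pose proof (Rabs_triang (u - t) t). replace (u - t + t) with u in * by ring. lra. }
  apply (Rmult_lt_compat_l K) in A2; [|unfold K; lra]. field_simplify in A2; [|unfold K; lra].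
  rewrite <- pow2_abs.
  assert (3 * (Rabs t + Rabs u) <= K) by (unfold K; lra).
  assert (3 * (Rabs t + Rabs u) * Rabs (u - t) <= K * Rabs (u - t)) by (apply Rmult_le_compat_r; lra).
  nra.
Qed.

Lemma is_deriv1_cube_pos1 t : is_deriv1 cube_pos1 (cube_pos2 t) t.
Proof.
  intros eps He. exists (eps / 6). split; [lra|]. intros u Hu.
  eapply Rle_trans; [apply cube_pos1_taylor|]. pose proof (Rabs_pos (u - t)).
  rewrite <- pow2_abs. nra.
Qed.

Lemma cont_at1_cube_pos2 t : cont_at1 cube_pos2 t.
Proof.
  intros eps He. exists (eps / 6). split; [lra|]. intros u Hu. unfold cube_pos2.
  apply Rabs_def2 in Hu. apply Rabs_def1; unfold Rmax;
    destruct (Rle_dec 0 u), (Rle_dec 0 t); lra.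
Qed.

Section Bump.
Variable d : nat.

(* [theta x0 k] equals 1 at [x0], vanishes for [|y - x0| >= k^(-1/4)] and, being a
   function of [|y - x0|^4] near [x0], has zero first and second derivatives there. *)
Definition theta (x0 : Rd d) (k : R) (y : Rd d) : R := cube_pos (quad k (sqdist d x0 y)).

Lemma sqdist_self (x0 : Rd d) : sqdist d x0 x0 = 0.
Proof.
  unfold sqdist. rewrite (sumR_ext _ _ (fun _ => 0)), sumR_const by (intros; ring). ring.
Qed.

Lemma theta_center (x0 : Rd d) k : theta x0 k x0 = 1.
Proof.
  unfold theta, cube_pos, quad. rewrite sqdist_self.
  replace (1 - k * 0 ^ 2) with 1 by ring. rewrite Rmax_right by lra. ring.
Qed.

Lemma theta_range (x0 : Rd d) k y : 0 <= k -> 0 <= theta x0 k y <= 1.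
Proof.
  intros Hk. unfold theta, cube_pos, quad. pose proof (pow2_ge_0 (sqdist d x0 y)).
  assert (0 <= k * sqdist d x0 y ^ 2) by nra.
  unfold Rmax. destruct (Rle_dec 0 _).
  - split; [apply pow_le; auto|]. replace 1 with (1 ^ 3) by ring. apply pow_incr. lra.
  - replace (0 ^ 3) with 0 by ring. lra.
Qed.

Lemma theta_far (x0 y : Rd d) rho : 0 < rho -> rho <= vdist y x0 -> theta x0 (/ rho ^ 4) y = 0.
Proof.
  intros Hr Hy. unfold theta, cube_pos, quad. rewrite sqdist_eq.
  assert (rho ^ 4 <= (vdist y x0 ^ 2) ^ 2) by (rewrite <- pow_mult; apply pow_incr; lra).
  assert (0 < rho ^ 4) by (apply pow_lt; auto).
  assert (1 <= / rho ^ 4 * (vdist y x0 ^ 2) ^ 2).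
  { apply (Rmult_le_reg_l (rho ^ 4)); auto. rewrite <- Rmult_assoc, Rinv_r by lra. lra. }
  rewrite Rmax_left by lra. ring.
Qed.

Lemma theta_gap (x0 y : Rd d) k tau : 0 <= k -> 0 < tau -> tau <= vdist y x0 ->
  Rmin 1 (k * tau ^ 4) <= 1 - theta x0 k y.
Proof.
  intros Hk Ht Hy. unfold theta, cube_pos, quad. rewrite sqdist_eq.
  assert (tau ^ 4 <= (vdist y x0 ^ 2) ^ 2) by (rewrite <- pow_mult; apply pow_incr; lra).
  assert (k * tau ^ 4 <= k * (vdist y x0 ^ 2) ^ 2) by (apply Rmult_le_compat_l; auto).
  pose proof (Rmin_l 1 (k * tau ^ 4)). pose proof (Rmin_r 1 (k * tau ^ 4)).
  pose proof (pow2_ge_0 (vdist y x0 ^ 2)).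
  set (q := 1 - k * (vdist y x0 ^ 2) ^ 2) in *.
  unfold Rmax. destruct (Rle_dec 0 q).
  - assert (q <= 1) by (unfold q; nra). assert (q ^ 3 <= q) by nra. unfold q in *. lra.
  - replace (0 ^ 3) with 0 by ring. lra.
Qed.

Lemma C2_at_theta (x0 : Rd d) k : exists Dt D2t,
  (forall y, C2_at (theta x0 k) Dt D2t y) /\
  (forall i, (i < d)%nat -> proj1_sig (Dt x0) i = 0) /\
  (forall i j, (i < d)%nat -> (j < d)%nat -> proj1_sig (D2t x0) i j = 0).
Proof.
  set (s := sqdist d x0).
  set (Ds := fun y : Rd d => @Rd_of d (fun i => 2 * (proj1_sig y i - proj1_sig x0 i))).
  set (D2s := fun _ : Rd d => sym_of d (fun i j => if Nat.eq_dec i j then 2 else 0)).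
  set (q := fun y => quad k (s y)).
  set (Dq := fun y => @Rd_of d (fun j => quad1 k (s y) * proj1_sig (Ds y) j)).
  set (D2q := fun y => sym_of d (fun i j => quad2 k (s y) * proj1_sig (Ds y) i * proj1_sig (Ds y) j
                                           + quad1 k (s y) * proj1_sig (D2s y) i j)).
  exists (fun y => @Rd_of d (fun j => cube_pos1 (q y) * proj1_sig (Dq y) j)),
    (fun y => sym_of d (fun i j => cube_pos2 (q y) * proj1_sig (Dq y) i * proj1_sig (Dq y) j
                                  + cube_pos1 (q y) * proj1_sig (D2q y) i j)).
  assert (Hs0 : s x0 = 0) by apply sqdist_self.
  assert (HDs : forall m, (m < d)%nat -> proj1_sig (Ds x0) m = 0)
    by (intros m Hm; unfold Ds; rewrite Rd_of_coord by auto; ring).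
  assert (HDq : forall m, (m < d)%nat -> proj1_sig (Dq x0) m = 0)
    by (intros m Hm; unfold Dq; rewrite Rd_of_coord, Hs0 by auto; unfold quad1; ring).
  split; [|split].
  - intros y.
    assert (Cq : C2_at q Dq D2q y) by
      (apply C2_at_comp; [apply C2_at_sqdist | apply is_deriv1_quad | apply is_deriv1_quad1
                         | apply cont_at1_quad2]).
    apply C2_at_comp; [exact Cq | apply is_deriv1_cube_pos | apply is_deriv1_cube_pos1
                      | apply cont_at1_cube_pos2].
  - intros i Hi. rewrite Rd_of_coord, HDq by auto. ring.
  - intros i j Hi Hj. rewrite sym_of_entry, !HDq by auto. unfold D2q.
    rewrite !sym_of_entry, !HDs, Hs0 by auto. unfold quad1. field.
Qed.

Lemma theta_cont (x0 : Rd d) k y : cont_at (theta x0 k) y.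
Proof.
  destruct (C2_at_theta x0 k) as [Dt [D2t [HC _]]]. apply (is_grad_cont d _ _ _ (proj1 (HC y))).
Qed.

Lemma C2_closure_bump (Om : Rd d -> Prop) phi (Dphi : Rd d -> Rd d) (D2phi : Rd d -> Sym d) x0 k K :
  C2_closure Om phi Dphi D2phi ->
  exists Dpsi D2psi, C2_closure Om (fun y => theta x0 k y * (phi y - K) + K) Dpsi D2psi /\
    Dpsi x0 = Dphi x0 /\ D2psi x0 = D2phi x0.
Proof.
  intros [U [HU [HcU HC]]]. destruct (C2_at_theta x0 k) as [Dt [D2t [Ht [HDt HD2t]]]].
  eexists. eexists. split; [|split].
  - exists U. split; [auto | split; [auto|]]. intros x Hx.
    apply C2_at_add_const, C2_at_mul; [apply Ht|]. apply C2_at_add_const, HC. auto.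
  - apply Rd_ext. intros i Hi. rewrite !Rd_of_coord, theta_center, HDt by auto. ring.
  - apply Sym_ext. intros i j Hi Hj.
    rewrite sym_of_entry, theta_center, !HDt, !HD2t, (Sym_sym d (D2phi x0) j i) by auto. field.
Qed.
End Bump.

Arguments theta {d}.

(** * Perturbed touching points of the approximate solutions *)

Lemma exp_neg_inv_lt h : 0 < h -> exp (- / h) < h.
Proof.
  intros Hh. rewrite exp_Ropp. pose proof (Rinv_0_lt_compat h Hh).
  pose proof (exp_ineq1 (/ h) ltac:(lra)). pose proof (exp_pos (/ h)).
  rewrite <- (Rinv_inv h) at 2. apply Rinv_lt_contravar; [apply Rmult_lt_0_compat|]; lra.
Qed.

Section Touching.
Variable d : nat.
Variable Om : Rd d -> Prop.

Lemma ind_cases (x y : Clos Om) : (y = x /\ Defs.ind x y = 1) \/ (y <> x /\ Defs.ind x y = 0).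
Proof. unfold Defs.ind. destruct (excluded_middle_informative (y = x)); auto. Qed.

Lemma ind_self (x : Clos Om) : Defs.ind x x = 1.
Proof. destruct (ind_cases x x) as [[_ ->]|[Hne _]]; [reflexivity | congruence]. Qed.

Lemma exists_approx_max (w : Clos Om -> R) B e (y0 : Clos Om) : 0 < e ->
  (forall y, w y <= B) -> exists ym, forall y, w y <= w ym + e.
Proof.
  intros He HB.
  destruct (completeness (fun v => exists y, v = w y)) as [M [Hub Hlub]].
  - exists B. intros v [y ->]. auto.
  - exists (w y0), y0. reflexivity.
  - apply NNPP. intros Hno. enough (M <= M - e) by lra.
    apply Hlub. intros v [y ->]. apply Rnot_lt_le. intros Hlt.
    apply Hno. exists y. intros y'. assert (w y' <= M) by (apply Hub; eauto). lra.
Qed.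

(* As [h -> 0], the supremum of [u h - psi] tends to [0] and the points where
   [u h - psi] is close to [0] concentrate at [x]. *)
Definition peaks_at (u : R -> Clos Om -> R) (psi : Clos Om -> R) (x : Clos Om) : Prop :=
  (forall tau, 0 < tau -> exists eta h1, 0 < eta /\ 0 < h1 /\ forall h y, 0 < h < h1 ->
     u h y - psi y < tau /\ (- eta < u h y - psi y -> cdist y x < tau)) /\
  (forall eta dl, 0 < eta -> 0 < dl -> exists h y, 0 < h < dl /\ - eta < u h y - psi y).

Lemma exists_touching u psi x : peaks_at u psi x -> forall tau, 0 < tau ->
  exists h y xi, 0 < h < tau /\ cdist y x < tau /\ Rabs xi < tau /\
    (forall z, u h z + exp (- / h) * Defs.ind y z <= psi z + xi) /\
    psi y + xi = u h y + exp (- / h).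
Proof.
  intros [Hconc Happ] tau Htau.
  destruct (Hconc (tau / 2)) as [eta [h1 [Heta [Hh1 Hw]]]]; [lra|].
  set (eta' := Rmin eta (tau / 2)).
  assert (Heta' : 0 < eta') by (apply Rmin_pos; lra).
  assert (eta' <= eta) by apply Rmin_l. assert (eta' <= tau / 2) by apply Rmin_r.
  destruct (Happ (eta' / 2) (Rmin h1 (eta' / 2))) as [h [z [Hh Hz]]];
    [lra | apply Rmin_pos; lra |].
  pose proof (Rmin_l h1 (eta' / 2)). pose proof (Rmin_r h1 (eta' / 2)).
  set (e := exp (- / h)). assert (He : 0 < e) by apply exp_pos.
  assert (Heh : e < h) by (apply exp_neg_inv_lt; lra).
  set (w := fun y => u h y - psi y).
  destruct (exists_approx_max w (tau / 2) e z He) as [ym Hym].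
  { intros y. apply Rlt_le, (Hw h y). lra. }
  assert (Hlow : - eta' < w ym) by (specialize (Hym z); unfold w in *; lra).
  destruct (Hw h ym ltac:(lra)) as [Hup Hloc].
  exists h, ym, (w ym + e). repeat split; try lra.
  - enough (cdist ym x < tau / 2) by lra. apply Hloc. unfold w in Hlow. lra.
  - apply Rabs_def1; unfold w in *; lra.
  - intros y. fold e. destruct (ind_cases ym y) as [[-> ->]|[_ ->]]; unfold w; [lra|].
    specialize (Hym y). unfold w in Hym. lra.
  - unfold w, e. ring.
Qed.
End Touching.

Arguments peaks_at {d Om}.

Section BumpPeaks.
Variable d : nat.
Variable Om : Rd d -> Prop.
Variable u : R -> Clos Om -> R.
Variable C : R.
Hypothesis u_bounded : forall h x, 0 < h -> Rabs (u h x) <= C.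

Lemma eventually_below_on_ball (g : Rd d -> R) (x : Clos Om) rho : 0 < rho ->
  (forall z : Clos Om, cont_at g (proj1_sig z)) ->
  (forall z : Clos Om, cdist z x <= rho -> hr_sup u z <= g (proj1_sig z)) ->
  forall eps, 0 < eps -> exists h1, 0 < h1 /\
    forall h y, 0 < h < h1 -> cdist y x < rho -> u h y - g (proj1_sig y) < eps.
Proof.
  intros Hrho Hg Habove eps He. apply (eventually_uniform_on_ball d Om x rho _ Hrho).
  intros z Hz. specialize (Habove z Hz).
  destruct (proj1 (hr_sup_spec d Om u C u_bounded z) (eps / 2)) as [d1 [Hd1 Hsup]]; [lra|].
  destruct (Hg z (eps / 2)) as [d2 [Hd2 Hcont]]; [lra|].
  exists (Rmin d1 d2). split; [apply Rmin_pos; auto|]. intros h y [Hh0 Hh] Hy.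
  apply Rmin_Rgt in Hh as [Hh1 _]. apply Rmin_Rgt in Hy as [Hy1 Hy2].
  specialize (Hsup (h, y) (conj (conj Hh0 Hh1) Hy1)). pose proof (Rabs_def2 _ _ (Hcont _ Hy2)).
  simpl in Hsup. lra.
Qed.

(* With [K] above [u], the test function [theta (g - K) + K] exceeds [g] by [1 - theta]
   near [x] and is [K] far from it: the maxima of [u h - psi] concentrate at [x]. *)
Lemma bump_peaks (g : Rd d -> R) (x : Clos Om) r0 : 0 < r0 ->
  (forall z : Clos Om, cont_at g (proj1_sig z)) ->
  (forall z : Clos Om, cdist z x < r0 -> hr_sup u z <= g (proj1_sig z)) ->
  g (proj1_sig x) = hr_sup u x ->
  exists k K, 0 <= k /\
    bnd (fun z : Clos Om => theta (proj1_sig x) k (proj1_sig z) * (g (proj1_sig z) - K) + K) /\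
    peaks_at u (fun z => theta (proj1_sig x) k (proj1_sig z) * (g (proj1_sig z) - K) + K) x.
Proof.
  intros Hr0 Hg Habove Htouch. set (x0 := proj1_sig x) in *. set (Vx := hr_sup u x) in *.
  pose proof (Rabs_hr_sup_le d Om u C u_bounded x) as HVx. fold Vx in HVx.
  assert (HC : 0 <= C) by (pose proof (u_bounded 1 x Rlt_0_1); pose proof (Rabs_pos (u 1 x)); lra).
  pose proof (Rabs_le_bounds _ _ HVx). pose proof (Rabs_pos Vx). pose proof (Rle_abs Vx).
  destruct (Hg x 1) as [dc [Hdc Hgx]]; [lra|]. fold x0 in Hgx. rewrite Htouch in Hgx.
  set (rho := Rmin (r0 / 2) (dc / 2)).
  assert (Hrho : 0 < rho) by (apply Rmin_pos; lra).
  assert (rho <= r0 / 2) by apply Rmin_l. assert (rho <= dc / 2) by apply Rmin_r.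
  set (k := / rho ^ 4). assert (Hk : 0 < k) by (apply Rinv_0_lt_compat, pow_lt; auto).
  set (K := C + Rabs Vx + 2).
  set (th := fun z : Clos Om => theta x0 k (proj1_sig z)).
  set (psi := fun z : Clos Om => th z * (g (proj1_sig z) - K) + K).
  assert (Hfar : forall z, rho <= cdist z x -> psi z = K)
    by (intros z Hz; unfold psi, th, k; rewrite theta_far by auto; ring).
  assert (Hnear : forall z, cdist z x < rho ->
            g (proj1_sig z) + (1 - th z) <= psi z /\ Vx - 1 < g (proj1_sig z) < Vx + 1).
  { intros z Hz. pose proof (Rabs_def2 _ _ (Hgx (proj1_sig z) ltac:(unfold cdist in Hz; fold x0 in Hz; lra))).
    pose proof (theta_range d x0 k (proj1_sig z) (Rlt_le _ _ Hk)). fold (th z) in *.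
    split; [|lra]. unfold psi.
    assert (0 <= (1 - th z) * (K - g (proj1_sig z) - 1)) by (apply Rmult_le_pos; unfold K; lra).
    nra. }
  assert (Hrange : forall z, Vx - 1 <= psi z <= K).
  { intros z. destruct (Rlt_le_dec (cdist z x) rho) as [Hz|Hz]; [|rewrite Hfar by auto; unfold K; lra].
    destruct (Hnear z Hz) as [Hlow Hg1]. pose proof (theta_range d x0 k (proj1_sig z) (Rlt_le _ _ Hk)).
    fold (th z) in *. split; [lra|]. unfold psi.
    assert (0 <= th z * (K - g (proj1_sig z))) by (apply Rmult_le_pos; unfold K; lra). nra. }
  pose proof (eventually_below_on_ball g x rho Hrho Hg ltac:(intros z Hz; apply Habove; lra)) as Hbelow.
  exists k, K. change (0 <= k /\ bnd psi /\ peaks_at u psi x). split; [lra|]. split; [|split].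
  - exists (K + Rabs Vx + 1). intros z. apply Rabs_le. specialize (Hrange z).
    assert (C + Rabs Vx + 2 <= K) by (unfold K; lra). split; lra.
  - intros tau Htau. set (m := Rmin 1 (k * tau ^ 4)).
    assert (Hm : 0 < m) by (apply Rmin_pos; [lra | apply Rmult_lt_0_compat, pow_lt; auto]).
    assert (m <= 1) by apply Rmin_l.
    assert (Hmin_pos : 0 < Rmin (m / 2) tau) by (apply Rmin_pos; lra).
    assert (Rmin (m / 2) tau <= m / 2) by apply Rmin_l. assert (Rmin (m / 2) tau <= tau) by apply Rmin_r.
    destruct (Hbelow (Rmin (m / 2) tau) Hmin_pos) as [h1 [Hh1 HU]].
    exists (m / 2), h1. split; [lra | split; [lra|]]. intros h y Hh.
    pose proof (Rabs_le_bounds _ _ (u_bounded h y ltac:(lra))).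
    destruct (Rlt_le_dec (cdist y x) rho) as [Hin|Hout].
    + specialize (HU h y Hh Hin). destruct (Hnear y Hin) as [Hsep _].
      pose proof (theta_range d x0 k (proj1_sig y) (Rlt_le _ _ Hk)). fold (th y) in *.
      split; [lra|]. intros Hw. apply Rnot_le_lt. intros Hge.
      pose proof (theta_gap d x0 (proj1_sig y) k tau (Rlt_le _ _ Hk) Htau Hge) as Hgap.
      fold m (th y) in Hgap. lra.
    + rewrite Hfar by auto. unfold K. split; [lra|]. intros. lra.
  - intros eta dl Heta Hdl.
    assert (Hpsi : cont_at (fun y => theta x0 k y * (g y - K) + K) x0)
      by (apply cont_at_add, cont_at_const; apply cont_at_mul, cont_at_add, cont_at_const;
          apply theta_cont || apply Hg).
    destruct (Hpsi (eta / 2)) as [dp [Hdp Hp]]; [lra|].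
    destruct (proj2 (hr_sup_spec d Om u C u_bounded x) (eta / 2) (Rmin dl dp)) as [[h z] [[Hh Hz] Hv]];
      [lra | apply Rmin_pos; auto |].
    simpl in Hh, Hz, Hv. apply Rmin_Rgt in Hz as [_ Hz].
    destruct Hh as [Hh0 Hh]. apply Rmin_Rgt in Hh as [Hh _].
    pose proof (Rabs_def2 _ _ (Hp _ Hz)) as Hpz. rewrite theta_center, Htouch in Hpz. fold Vx in Hv.
    exists h, z. split; [lra|]. change (- eta < u h z - psi z).
    assert (psi z = theta x0 k (proj1_sig z) * (g (proj1_sig z) - K) + K) by reflexivity. lra.
Qed.
End BumpPeaks.

Lemma C2_closure_shift {d : nat} (Om : Rd d -> Prop) phi Dphi D2phi a :
  C2_closure Om phi Dphi D2phi -> C2_closure Om (fun y => phi y + a) Dphi D2phi.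
Proof.
  intros [U [HU [HcU HC]]]. exists U. split; [auto | split; [auto|]].
  intros x Hx. apply (C2_at_add_const d phi Dphi D2phi x a), HC. auto.
Qed.

Lemma C2_closure_cont {d : nat} (Om : Rd d -> Prop) phi Dphi D2phi :
  C2_closure Om phi Dphi D2phi -> forall z : Clos Om, cont_at phi (proj1_sig z).
Proof.
  intros [U [HU [HcU HC]]] z. apply (is_grad_cont d phi (proj1_sig (Dphi (proj1_sig z)))).
  apply HC, HcU, proj2_sig.
Qed.

Section SchemeAtTouching.
Variable d : nat.
Variable Om : Rd d -> Prop.
Variable S : R -> Clos Om -> (Clos Om -> R) -> R -> R.
Variable f : R -> Clos Om -> R.
Hypothesis S_monotone : monotone S.
Hypothesis S_perturb : forall h x l (phi : Clos Om -> R) s, 0 < h -> bnd phi -> (s = 1 \/ s = -1) ->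
  Rabs (S h x (fun y => phi y + s * exp (- / h) * Defs.ind x y) l - S h x phi l) <= f h x.

Let bnd_add_const (V : Clos Om -> R) c : bnd V -> bnd (fun z => V z + c).
Proof.
  intros [CV HV]. exists (CV + Rabs c). intros z.
  eapply Rle_trans; [apply Rabs_triang | specialize (HV z); lra].
Qed.

Let bnd_add_ind (V : Clos Om -> R) c y : bnd V -> bnd (fun z => V z + c * Defs.ind y z).
Proof.
  intros [CV HV]. exists (CV + Rabs c). intros z.
  eapply Rle_trans; [apply Rabs_triang|]. specialize (HV z). rewrite Rabs_mult.
  pose proof (Rabs_pos c).
  destruct (ind_cases d Om y z) as [[_ ->]|[_ ->]]; rewrite ?Rabs_R1, ?Rabs_R0; lra.
Qed.

Lemma scheme_le_at_touching (V psi : Clos Om -> R) h y xi l :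
  0 < h -> bnd V -> bnd psi -> S h y V l = 0 ->
  (forall z, V z + exp (- / h) * Defs.ind y z <= psi z + xi) ->
  psi y + xi = V y + exp (- / h) ->
  S h y (fun z => psi z + xi) l <= f h y.
Proof.
  intros Hh HV Hpsi HS Hle Heq.
  assert (Hmono : S h y (fun z => psi z + xi) l
                  <= S h y (fun z => V z + 1 * exp (- / h) * Defs.ind y z) l).
  { apply (S_monotone h y _ _ l Hh).
    - apply bnd_add_const, Hpsi.
    - apply (bnd_add_ind V (1 * exp (- / h)) y HV).
    - intros z. specialize (Hle z). lra.
    - rewrite ind_self. lra. }
  pose proof (Rabs_le_bounds _ _ (S_perturb h y l V 1 Hh HV (or_introl eq_refl))). lra.
Qed.

Lemma scheme_ge_at_touching (V psi : Clos Om -> R) h y xi l :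
  0 < h -> bnd V -> bnd psi -> S h y V l = 0 ->
  (forall z, psi z + xi <= V z - exp (- / h) * Defs.ind y z) ->
  psi y + xi = V y - exp (- / h) ->
  - f h y <= S h y (fun z => psi z + xi) l.
Proof.
  intros Hh HV Hpsi HS Hle Heq.
  assert (Hmono : S h y (fun z => V z + -1 * exp (- / h) * Defs.ind y z) l
                  <= S h y (fun z => psi z + xi) l).
  { apply (S_monotone h y _ _ l Hh).
    - apply (bnd_add_ind V (-1 * exp (- / h)) y HV).
    - apply bnd_add_const, Hpsi.
    - intros z. specialize (Hle z). lra.
    - rewrite ind_self. lra. }
  pose proof (Rabs_le_bounds _ _ (S_perturb h y l V (-1) Hh HV (or_intror eq_refl))). lra.
Qed.
End SchemeAtTouching.

Section Convergence.
Variable d : nat.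
Variable Om : Rd d -> Prop.
Variable F : Clos Om -> R -> Rd d -> Sym d -> R -> R.
Variable I : (Clos Om -> R) -> (Clos Om -> R).
Variable S : R -> Clos Om -> (Clos Om -> R) -> R -> R.
Variable Ih : R -> (Clos Om -> R) -> (Clos Om -> R).
Variable Vh : R -> Clos Om -> R.
Variable C : R.
Hypothesis Vh_bounded : forall h x, 0 < h -> Rabs (Vh h x) <= C.
Hypothesis S_monotone : monotone S.
Hypothesis S_consistent : nonloc_consistent F I S Ih.
Hypothesis S_condT : condT S.
Hypothesis Vh_solves : forall h, 0 < h -> scheme_sol S Ih h (Vh h).

Theorem hr_sup_subsolution : visc_sub F I (hr_sup Vh).
Proof.
  split; [exact (hr_sup_usc d Om Vh C Vh_bounded)|].
  intros phi Dphi D2phi Hphi x [r0 [Hr0 Hmax]]. set (x0 := proj1_sig x) in *.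
  set (g := fun y => phi y + (hr_sup Vh x - phi x0)).
  assert (Hg : C2_closure Om g Dphi D2phi) by apply C2_closure_shift, Hphi.
  destruct (bump_peaks d Om Vh C Vh_bounded g x r0) as [k [K [_ [Hbnd Hpeak]]]];
    [exact Hr0 | exact (C2_closure_cont Om g Dphi D2phi Hg)
    | intros z Hz; specialize (Hmax z Hz); simpl in Hmax; unfold g; lra
    | unfold g, x0; ring |].
  destruct (C2_closure_bump d Om g Dphi D2phi x0 k K Hg) as [Dpsi [D2psi [Hpsi [<- <-]]]].
  set (psi := fun y => theta x0 k y * (g y - K) + K) in *.
  replace (hr_sup Vh x) with (psi x0) by (unfold psi, g; rewrite theta_center; ring).
  destruct (S_consistent Vh (ex_intro _ C Vh_bounded) psi Dpsi D2psi Hpsi x) as [Hlow _].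
  destruct S_condT as [f [_ [Hf_small Hf_perturb]]].
  apply (liminf_ge_nonpos _ _ _ Hlow). intros eps dl Heps Hdl.
  destruct (Hf_small x eps Heps) as [df [Hdf Hf]].
  destruct (exists_touching d Om Vh (fun z => psi (proj1_sig z)) x Hpeak (Rmin dl df))
    as [h [y [xi [Hh [Hy [Hxi [Htouch Heq]]]]]]]; [apply Rmin_pos; auto|].
  pose proof (Rmin_l dl df). pose proof (Rmin_r dl df).
  exists (h, y, xi). split; [unfold near_hyxi; repeat split; lra|].
  destruct (Vh_solves h ltac:(lra)) as [Hsol_bnd Hsol].
  eapply Rle_lt_trans;
    [apply (scheme_le_at_touching d Om S f S_monotone Hf_perturb (Vh h) _ h y xi); auto; lra|].
  apply Hf; lra.
Qed.

(* The supersolution property of [hr_inf Vh] is the subsolution argument for [- Vh]: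
   the bump built from [- phi] is the negative of the test function. *)
Theorem hr_inf_supersolution : visc_super F I (hr_inf Vh).
Proof.
  split; [exact (hr_inf_lsc d Om Vh C Vh_bounded)|].
  intros phi Dphi D2phi Hphi x [r0 [Hr0 Hmin]]. set (x0 := proj1_sig x) in *.
  set (g := fun y => phi y + (hr_inf Vh x - phi x0)).
  assert (Hg : C2_closure Om g Dphi D2phi) by apply C2_closure_shift, Hphi.
  assert (Hneg_bounded : forall h y, 0 < h -> Rabs (- Vh h y) <= C)
    by (intros h y Hh; rewrite Rabs_Ropp; auto).
  destruct (bump_peaks d Om (fun h y => - Vh h y) C Hneg_bounded (fun y => - g y) x r0)
    as [k [K [_ [Hbnd Hpeak]]]];
    [exact Hr0 | intros z; apply cont_at_opp, (C2_closure_cont Om g Dphi D2phi Hg)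
    | intros z Hz; specialize (Hmin z Hz); pose proof (hr_inf_opp d Om Vh z);
      pose proof (hr_inf_opp d Om Vh x); simpl in Hmin; unfold g; lra
    | pose proof (hr_inf_opp d Om Vh x); unfold g, x0; lra |].
  destruct (C2_closure_bump d Om g Dphi D2phi x0 k (- K) Hg) as [Dpsi [D2psi [Hpsi [<- <-]]]].
  set (psi := fun y => theta x0 k y * (g y - - K) + - K) in *.
  replace (hr_inf Vh x) with (psi x0) by (unfold psi, g; rewrite theta_center; ring).
  destruct (S_consistent Vh (ex_intro _ C Vh_bounded) psi Dpsi D2psi Hpsi x) as [_ Hup].
  destruct S_condT as [f [_ [Hf_small Hf_perturb]]].
  apply Rle_ge, (limsup_le_nonneg _ _ _ Hup). intros eps dl Heps Hdl.
  destruct (Hf_small x eps Heps) as [df [Hdf Hf]].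
  destruct (exists_touching d Om _ _ x Hpeak (Rmin dl df))
    as [h [y [xi [Hh [Hy [Hxi [Htouch Heq]]]]]]]; [apply Rmin_pos; auto|].
  pose proof (Rmin_l dl df). pose proof (Rmin_r dl df).
  exists (h, y, - xi). split; [unfold near_hyxi; rewrite Rabs_Ropp; repeat split; lra|].
  destruct (Vh_solves h ltac:(lra)) as [Hsol_bnd Hsol].
  assert (Hf_lt : f h y < eps) by (apply Hf; lra).
  enough (- f h y <= S h y (fun z => psi (proj1_sig z) + - xi) (Ih h (Vh h) y)) by lra.
  apply (scheme_ge_at_touching d Om S f S_monotone Hf_perturb (Vh h) _ h y (- xi)).
  - lra.
  - exact Hsol_bnd.
  - destruct Hbnd as [B HB]. exists B. intros z. specialize (HB z).
    replace (psi (proj1_sig z)) with (- (theta x0 k (proj1_sig z) * (- g (proj1_sig z) - K) + K))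
      by (unfold psi; ring).
    rewrite Rabs_Ropp. exact HB.
  - apply Hsol.
  - intros z. specialize (Htouch z). unfold psi, x0 in *. lra.
  - unfold psi, x0 in *. lra.
Qed.
End Convergence.

Lemma loc_unif_conv_of_hr_eq {d : nat} {Om : Rd d -> Prop} (u : R -> Clos Om -> R) C :
  (forall h x, 0 < h -> Rabs (u h x) <= C) ->
  hr_inf u = hr_sup u -> loc_unif_conv u (hr_sup u).
Proof.
  intros Hu Heq x. exists 1. split; [lra|]. intros eps He.
  assert (Hnu : forall h x, 0 < h -> Rabs (- u h x) <= C) by (intros; rewrite Rabs_Ropp; auto).
  apply (eventually_uniform_on_ball d Om x 1 (fun h y => Rabs (u h y - hr_sup u y) < eps)); [lra|].
  intros z _.
  destruct (proj1 (hr_sup_spec d Om u C Hu z) (eps / 3)) as [d1 [Hd1 Hsup]]; [lra|].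
  destruct (proj1 (hr_sup_spec d Om _ C Hnu z) (eps / 3)) as [d2 [Hd2 Hinf]]; [lra|].
  destruct (hr_sup_usc d Om u C Hu z (eps / 3)) as [d3 [Hd3 Husc]]; [lra|].
  destruct (hr_inf_lsc d Om u C Hu z (eps / 3)) as [d4 [Hd4 Hlsc]]; [lra|].
  rewrite Heq in Hlsc. pose proof (hr_inf_opp d Om u z) as Hopp. rewrite Heq in Hopp.
  exists (Rmin (Rmin d1 d2) (Rmin d3 d4)). split; [repeat apply Rmin_pos; auto|].
  intros h y [Hh0 Hh] Hy.
  apply Rmin_Rgt in Hh as [Hh Hh']. apply Rmin_Rgt in Hh as [Hh1 Hh2].
  apply Rmin_Rgt in Hy as [Hy Hy']. apply Rmin_Rgt in Hy as [Hy1 Hy2]. apply Rmin_Rgt in Hy' as [Hy3 Hy4].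
  specialize (Hsup (h, y) (conj (conj Hh0 Hh1) Hy1)). specialize (Hinf (h, y) (conj (conj Hh0 Hh2) Hy2)).
  specialize (Husc y Hy3). specialize (Hlsc y Hy4). simpl in Hsup, Hinf.
  apply Rabs_def1; lra.
Qed.

Theorem theorem4p11 (d : nat) (Om : Rd d -> Prop)
  (F : Clos Om -> R -> Rd d -> Sym d -> R -> R)
  (I : (Clos Om -> R) -> (Clos Om -> R))
  (S : R -> Clos Om -> (Clos Om -> R) -> R -> R)
  (Ih : R -> (Clos Om -> R) -> (Clos Om -> R))
  (Vh : R -> Clos Om -> R) :
  locally_bounded F ->
  comparison F I ->
  monotone S ->
  stable S Ih ->
  nonloc_consistent F I S Ih ->
  condT S ->
  (forall h, 0 < h -> scheme_sol S Ih h (Vh h)) ->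
  exists V : Clos Om -> R,
    bnd V /\ visc_sol F I V /\
    (forall W : Clos Om -> R, bnd W -> visc_sol F I W -> forall x, W x = V x) /\
    loc_unif_conv Vh V.
Proof.
  intros _ Hcomp Hmono [C HC] Hcons HT Hsol.
  assert (Hbd : forall h x, 0 < h -> Rabs (Vh h x) <= C)
    by (intros h x Hh; exact (HC h (Vh h) Hh (Hsol h Hh) x)).
  pose proof (hr_sup_subsolution d Om F I S Ih Vh C Hbd Hmono Hcons HT Hsol) as Hsub.
  pose proof (hr_inf_supersolution d Om F I S Ih Vh C Hbd Hmono Hcons HT Hsol) as Hsuper.
  assert (Hb_sup : bnd (hr_sup Vh)) by (exists C; apply Rabs_hr_sup_le; auto).
  assert (Hb_inf : bnd (hr_inf Vh)) by (exists C; apply Rabs_hr_inf_le; auto).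
  assert (Heq : hr_inf Vh = hr_sup Vh).
  { apply functional_extensionality. intros x. apply Rle_antisym.
    - apply (hr_inf_le_sup d Om Vh C Hbd).
    - apply (Hcomp _ _ Hb_sup Hb_inf Hsub Hsuper). }
  rewrite Heq in Hsuper.
  exists (hr_sup Vh). split; [exact Hb_sup | split; [split; auto | split]].
  - intros W HW [HWsub HWsuper] x. apply Rle_antisym.
    + exact (Hcomp _ _ HW Hb_sup HWsub Hsuper x).
    + exact (Hcomp _ _ Hb_sup HW Hsub HWsuper x).
  - exact (loc_unif_conv_of_hr_eq Vh C Hbd Heq).
Qed.
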